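(* $\mathcal{S}^*[1-\alpha,0]\subset\mathcal{S}^*_{car}$ for all $\alpha\in[1/2,1)$, and $\mathcal{S}^*[\alpha,-\alpha]\subset\mathcal{S}^*_{car}$ for all $\alpha\in(0,1/3]$. In particular, if $f\in\mathcal{A}$ satisfies \[\left|\frac{zf'(z)}{f(z)}-1\right|<\frac12\quad\text{or}\quad\left|\frac{zf'(z)/f(z)-1}{zf'(z)/f(z)+1}\right|<\frac13\] for all $z\in\mathbb{D}$, then $f\in\mathcal{S}^*_{car}$.
   Context: $\mathbb{D}=\{z:|z|<1\}$; $\mathcal{A}$ is the class of analytic $f$ on $\mathbb{D}$ with $f(0)=0$, $f'(0)=1$. $F\prec G$ means $F=G\circ w$ for an analytic $w:\mathbb{D}\to\mathbb{D}$ with $w(0)=0$. $\mathcal{S}^*_{car}$ is the class of $f\in\mathcal{A}$ with $zf'(z)/f(z)\prec 1+z+z^2/2$; for $-1\le B<A\le1$, $\mathcal{S}^*[A,B]$ is the class of $f\in\mathcal{A}$ with $zf'(z)/f(z)\prec(1+Az)/(1+Bz)$. *)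

From Stdlib Require Import Reals.
From Coquelicot Require Import Coquelicot.
Open Scope R_scope.

Definition inD (z : C) : Prop := Cmod z < 1.

Definition analytic_D (f : C -> C) : Prop :=
  forall z : C, inD z -> ex_derive f z.

Definition classA (f : C -> C) : Prop :=
  analytic_D f /\ f 0%C = 0%C /\ is_derive (K := C_AbsRing) (V := C_NormedModule) f (RtoC 0) (RtoC 1).

Definition subord (F G : C -> C) : Prop :=
  exists w : C -> C, analytic_D w /\ (forall z, inD z -> inD (w z)) /\
    w 0%C = 0%C /\ (forall z, inD z -> F z = G (w z)).

(* z f'(z) / f(z), with its removable-singularity value 1 at z = 0 *)
Definition zfpf (f : C -> C) (z : C) : C :=
  if Ceq_dec z 0%C then 1%C else (z * C_derive f z / f z)%C.

Definition phi_car (z : C) : C := (1 + z + z * z / 2)%C.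

Definition janowski (A B : R) (z : C) : C :=
  ((1 + RtoC A * z) / (1 + RtoC B * z))%C.

Definition S_star_car (f : C -> C) : Prop :=
  classA f /\ subord (zfpf f) phi_car.

Definition S_star_AB (A B : R) (f : C -> C) : Prop :=
  classA f /\ subord (zfpf f) (janowski A B).

(* Write [p] for [zf'/f].  The disk [|p - 5/4| < 3/4] is exactly
   the set where [|(p - 1)/(p + 1)| < 1/3], and it contains [|p - 1| < 1/2]
   and the images of the unit disk under the Janowski functions in question.
   Since [phi_car w = ((w + 1)^2 + 1) / 2], the branch [w = sqrt (2 p - 1) - 1]
   of [phi_car^-1] is holomorphic on that disk and maps it into the unit disk,
   so [p = phi_car o w] is a subordination as soon as [p] is holomorphic.
   For the Janowski classes this is clear; for the last statement it requires
   [f'] to be holomorphic.  This is obtained from Goursat's theorem for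
   rectangles: Cauchy's formula on a small square writes [f] as a quotient of
   boundary integrals that depend holomorphically on the parameter (the
   denominator, the boundary integral of [1 / (u - w)], is only shown to be
   nonzero, by the sign of its imaginary part). *)

From Stdlib Require Import Reals Lra Psatz Classical ClassicalEpsilon.
From Coquelicot Require Import Coquelicot.
Open Scope R_scope.

Notation is_Cderive f z l := (is_derive (K:=C_AbsRing) (V:=C_NormedModule) f z l).
Notation ex_Cderive f z := (ex_derive (K:=C_AbsRing) (V:=C_NormedModule) f z).

Lemma Cmod_sqr (z : C) : Cmod z * Cmod z = fst z * fst z + snd z * snd z.
Proof. unfold Cmod. rewrite sqrt_sqrt. simpl; ring. destruct z; simpl; nra. Qed.

Lemma Rabs_snd_le_Cmod (z : C) : Rabs (snd z) <= Cmod z.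
Proof. pose proof (Rmax_Cmod z). pose proof (Rmax_r (Rabs (fst z)) (Rabs (snd z))). lra. Qed.

Lemma fst_le_Cmod (z : C) : fst z <= Cmod z.
Proof. eapply Rle_trans; [apply Rle_abs | apply re_le_Cmod]. Qed.

Lemma Cmod_le_Rabs_fst_snd (z : C) : Cmod z <= Rabs (fst z) + Rabs (snd z).
Proof.
  pose proof (Cmod_ge_0 z). pose proof (Cmod_sqr z).
  pose proof (Rabs_pos (fst z)). pose proof (Rabs_pos (snd z)).
  pose proof (Rsqr_abs (fst z)). pose proof (Rsqr_abs (snd z)). unfold Rsqr in *. nra.
Qed.

Lemma Cmod_triangle_rev (a b : C) : Cmod a - Cmod b <= Cmod (a - b).
Proof. pose proof (Cmod_triangle (a - b) b). replace (a - b + b)%C with a in H by ring. lra. Qed.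

Lemma Cmod_triangle_rev_plus (a b : C) : Cmod a - Cmod b <= Cmod (a + b).
Proof. pose proof (Cmod_triangle_rev a (- b)). rewrite Cmod_opp in H. replace (a - - b)%C with (a + b)%C in H by ring. exact H. Qed.

Lemma Cmod_sub_sym (a b : C) : Cmod (a - b) = Cmod (b - a).
Proof. replace (a - b)%C with (- (b - a))%C by ring. apply Cmod_opp. Qed.

Lemma Cminus_neq_0 (u z : C) : u <> z -> (u - z)%C <> RtoC 0.
Proof. intros H E. apply H. replace u with ((u - z) + z)%C by ring. rewrite E. ring. Qed.

Lemma is_Cderive_eps (f : C -> C) z l :
  is_Cderive f z l <->
  forall eps, 0 < eps -> exists d, 0 < d /\ forall h, Cmod h < d ->
     Cmod (f (z + h) - f z - h * l)%C <= eps * Cmod h.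
Proof.
  split.
  - intros [_ Hd] eps Heps.
    specialize (Hd z (fun P H => H)).
    destruct (locally_norm_le_locally z _ (Hd (mkposreal eps Heps))) as [d Hd'].
    exists d; split; [apply cond_pos|]. intros h Hh.
    assert (H1 := Hd' (z + h)%C). unfold ball_norm in H1.
    simpl in H1. change (minus (z + h)%C z) with ((z + h) - z)%C in H1.
    replace ((z + h) - z)%C with h in H1 by ring.
    apply H1; exact Hh.
  - intros H. split. apply is_linear_scal_l.
    intros x Hx. apply (is_filter_lim_locally_unique (K:=C_AbsRing) (V:=AbsRing_NormedModule C_AbsRing)) in Hx. subst x.
    intros eps. apply (locally_le_locally_norm (K:=C_AbsRing) (V:=AbsRing_NormedModule C_AbsRing)).
    destruct (H eps (cond_pos eps)) as [d [Hd Hd']].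
    exists (mkposreal d Hd). intros y Hy. unfold ball_norm in Hy. simpl in Hy.
    change (minus y z) with (y - z)%C in *.
    specialize (Hd' (y - z)%C Hy).
    replace (z + (y - z))%C with (y : C) in Hd' by (change C in y; ring).
    exact Hd'.
Qed.

(* Coquelicot's rules for products and compositions are stated for [C] seen as
   a normed module over itself, whose uniform structure differs from that of
   [C_NormedModule]; both give the same derivatives. *)
Lemma is_Cderive_AbsRing f z l :
  is_Cderive f z l <-> is_derive (K:=C_AbsRing) (V:=AbsRing_NormedModule C_AbsRing) f z l.
Proof.
  unfold is_derive, filterdiff.
  split; intros [_ H]; (split; [apply is_linear_scal_l | exact H]).
Qed.

Lemma is_Cderive_eq (f : C -> C) (z a b : C) : is_Cderive f z a -> a = b -> is_Cderive f z b.
Proof. intros H ->; exact H. Qed.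

Lemma is_Cderive_loc_ext (f g : C -> C) (z l : C) r : 0 < r ->
  (forall w, Cmod (w - z) < r -> f w = g w) -> is_Cderive f z l -> is_Cderive g z l.
Proof.
  intros Hr Hfg H. rewrite is_Cderive_eps in *. intros eps He.
  destruct (H eps He) as [d [Hd H']]. exists (Rmin d r). split. apply Rmin_pos; lra.
  intros h Hh. rewrite <- !Hfg. apply H'. pose proof (Rmin_l d r). lra.
  replace (z - z)%C with (RtoC 0) by ring. rewrite Cmod_0. lra.
  replace (z + h - z)%C with h by ring. pose proof (Rmin_r d r). lra.
Qed.

Lemma is_Cderive_const (c : C) z : is_Cderive (fun _ => c) z (RtoC 0).
Proof. apply (is_derive_const (K:=C_AbsRing) (V:=C_NormedModule)). Qed.

Lemma is_Cderive_id z : is_Cderive (fun w => w) z (RtoC 1).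
Proof. apply is_Cderive_AbsRing, (is_derive_id (K:=C_AbsRing)). Qed.

Lemma is_Cderive_plus (f g : C -> C) (z a b : C) :
  is_Cderive f z a -> is_Cderive g z b -> is_Cderive (fun w => f w + g w)%C z (a + b)%C.
Proof. intros. apply (is_derive_plus (K:=C_AbsRing) (V:=C_NormedModule)); auto. Qed.

Lemma is_Cderive_minus (f g : C -> C) (z a b : C) :
  is_Cderive f z a -> is_Cderive g z b -> is_Cderive (fun w => f w - g w)%C z (a - b)%C.
Proof. intros. apply (is_derive_minus (K:=C_AbsRing) (V:=C_NormedModule)); auto. Qed.

Lemma is_Cderive_mult (f g : C -> C) (z a b : C) :
  is_Cderive f z a -> is_Cderive g z b -> is_Cderive (fun w => f w * g w)%C z (a * g z + f z * b)%C.
Proof.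
  rewrite !is_Cderive_AbsRing. intros Hf Hg.
  apply (is_derive_mult (K:=C_AbsRing)); auto. intros; apply Cmult_comm.
Qed.

Lemma is_Cderive_comp (f g : C -> C) (z a b : C) :
  is_Cderive f (g z) a -> is_Cderive g z b -> is_Cderive (fun w => f (g w)) z (b * a)%C.
Proof.
  intros Hf Hg. apply is_Cderive_AbsRing in Hg.
  apply (is_derive_comp (K:=C_AbsRing) (V:=C_NormedModule)); auto.
Qed.

Lemma is_Cderive_scal (c : C) (f : C -> C) (z a : C) :
  is_Cderive f z a -> is_Cderive (fun w => c * f w)%C z (c * a)%C.
Proof.
  intros H. eapply is_Cderive_eq. apply is_Cderive_mult; [apply is_Cderive_const | exact H].
  cbv beta. ring.
Qed.

Lemma is_Cderive_Cinv w : w <> RtoC 0 -> is_Cderive Cinv w (- / (w * w))%C.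
Proof.
  intros Hw. apply is_Cderive_eps. intros eps He.
  pose proof (proj1 (Cmod_gt_0 w) Hw) as Hm.
  set (m := Cmod w) in *.
  exists (Rmin (m / 2) (eps * (m * m * m) / 2)).
  split. { apply Rmin_pos. lra. apply Rmult_lt_0_compat; [|lra]. repeat apply Rmult_lt_0_compat; lra. }
  intros h Hh. pose proof (Rmin_l (m / 2) (eps * (m * m * m) / 2)).
  pose proof (Rmin_r (m / 2) (eps * (m * m * m) / 2)).
  pose proof (Cmod_triangle_rev_plus w h) as Htri. fold m in Htri. pose proof (Cmod_ge_0 h).
  assert (Hwh : (w + h)%C <> RtoC 0) by (apply (proj2 (Cmod_gt_0 _)); lra).
  replace (/ (w + h) - / w - h * - / (w * w))%C with (h * h / (w * w * (w + h)))%C by (field; tauto).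
  rewrite Cmod_div, !Cmod_mult by (repeat apply Cmult_neq_0; auto). fold m.
  set (n := Cmod (w + h)) in *. set (k := Cmod h) in *.
  assert (Hn : m <= 2 * n) by lra.
  assert (Hk : k <= eps * (m * m * n)).
  { assert (eps * (m * m * m) <= eps * (m * m * (2 * n))) by (apply Rmult_le_compat_l; [lra | nra]). lra. }
  apply (Rmult_le_reg_r (m * m * n)). repeat apply Rmult_lt_0_compat; lra.
  unfold Rdiv. rewrite Rmult_assoc, Rinv_l by (apply Rgt_not_eq; repeat apply Rmult_lt_0_compat; lra).
  nra.
Qed.

Lemma is_Cderive_inv (f : C -> C) (z l : C) :
  is_Cderive f z l -> f z <> RtoC 0 -> is_Cderive (fun w => / f w)%C z (- l / (f z * f z))%C.
Proof.
  intros H Hz. eapply is_Cderive_eq. apply (is_Cderive_comp Cinv f z _ _ (is_Cderive_Cinv _ Hz) H).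
  cbv beta. field. exact Hz.
Qed.

Lemma is_Cderive_div (f g : C -> C) (z a b : C) :
  is_Cderive f z a -> is_Cderive g z b -> g z <> RtoC 0 ->
  is_Cderive (fun w => f w / g w)%C z ((a * g z - f z * b) / (g z * g z))%C.
Proof.
  intros Hf Hg Hz. eapply is_Cderive_eq. apply (is_Cderive_mult _ _ _ _ _ Hf (is_Cderive_inv _ _ _ Hg Hz)).
  cbv beta. field. exact Hz.
Qed.

Definition Ccont (f : C -> C) (z : C) := forall e, 0 < e -> exists d, 0 < d /\
  forall w, Cmod (w - z) < d -> Cmod (f w - f z) < e.

Lemma is_Cderive_Ccont (f : C -> C) (z l : C) : is_Cderive f z l -> Ccont f z.
Proof.
  rewrite is_Cderive_eps. intros H e He. destruct (H 1 Rlt_0_1) as [d [Hd H']].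
  assert (Hl : 0 <= Cmod l) by apply Cmod_ge_0.
  exists (Rmin d (e / (Cmod l + 2))). split. apply Rmin_pos. lra. apply Rdiv_lt_0_compat; lra.
  intros w Hw. pose proof (Rmin_l d (e / (Cmod l + 2))) as M1. pose proof (Rmin_r d (e / (Cmod l + 2))) as M2.
  specialize (H' (w - z)%C ltac:(lra)). replace (z + (w - z))%C with w in H' by ring.
  pose proof (Cmod_triangle (f w - f z - (w - z) * l) ((w - z) * l)) as T.
  replace (f w - f z - (w - z) * l + (w - z) * l)%C with (f w - f z)%C in T by ring.
  rewrite Cmod_mult in T. pose proof (Cmod_ge_0 (w - z)) as P.
  assert (Cmod (w - z) * (Cmod l + 2) < e).
  { apply (Rmult_lt_reg_r (/ (Cmod l + 2))). apply Rinv_0_lt_compat; lra.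
    rewrite Rmult_assoc, Rinv_r by lra. rewrite Rmult_1_r. unfold Rdiv in M2. lra. }
  nra.
Qed.

Lemma ex_Cderive_Ccont f z : ex_Cderive f z -> Ccont f z.
Proof. intros [l H]. eapply is_Cderive_Ccont; eauto. Qed.

Lemma Ccont_const (c : C) z : Ccont (fun _ => c) z.
Proof. intros e He. exists 1. split. lra. intros. replace (c - c)%C with (RtoC 0) by ring. rewrite Cmod_0. lra. Qed.

Lemma Ccont_id z : Ccont (fun w => w) z.
Proof. intros e He. exists e. split; auto. Qed.

Lemma Ccont_comp (f g : C -> C) z : Ccont g z -> Ccont f (g z) -> Ccont (fun w => f (g w)) z.
Proof.
  intros Hg Hf e He. destruct (Hf e He) as [d1 [Hd1 H1]]. destruct (Hg d1 Hd1) as [d2 [Hd2 H2]].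
  exists d2. split; auto.
Qed.

Lemma Ccont_plus f g z : Ccont f z -> Ccont g z -> Ccont (fun w => f w + g w)%C z.
Proof.
  intros Hf Hg e He. destruct (Hf (e/2)) as [d1 [Hd1 H1]]. lra. destruct (Hg (e/2)) as [d2 [Hd2 H2]]. lra.
  exists (Rmin d1 d2). split. apply Rmin_pos; lra. intros w Hw.
  pose proof (Rmin_l d1 d2). pose proof (Rmin_r d1 d2).
  specialize (H1 w ltac:(lra)). specialize (H2 w ltac:(lra)).
  pose proof (Cmod_triangle (f w - f z) (g w - g z)) as T.
  replace (f w - f z + (g w - g z))%C with (f w + g w - (f z + g z))%C in T by ring. lra.
Qed.

Lemma Ccont_opp f z : Ccont f z -> Ccont (fun w => - f w)%C z.
Proof.
  intros Hf e He. destruct (Hf e He) as [d [Hd H]]. exists d. split; auto. intros w Hw.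
  replace (- f w - - f z)%C with (- (f w - f z))%C by ring. rewrite Cmod_opp. auto.
Qed.

Lemma Ccont_minus f g z : Ccont f z -> Ccont g z -> Ccont (fun w => f w - g w)%C z.
Proof. intros. apply Ccont_plus; auto. apply Ccont_opp; auto. Qed.

Lemma Ccont_mult f g z : Ccont f z -> Ccont g z -> Ccont (fun w => f w * g w)%C z.
Proof.
  intros Hf Hg e He.
  set (A := Cmod (f z) + 1). set (B := Cmod (g z) + 2).
  assert (HA : 1 <= A) by (unfold A; pose proof (Cmod_ge_0 (f z)); lra).
  assert (HB : 1 <= B) by (unfold B; pose proof (Cmod_ge_0 (g z)); lra).
  destruct (Hf (e / (2 * B))) as [d1 [Hd1 H1]]. apply Rdiv_lt_0_compat; lra.
  destruct (Hg (Rmin 1 (e / (2 * A)))) as [d2 [Hd2 H2]].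
  { apply Rmin_pos. lra. apply Rdiv_lt_0_compat; lra. }
  exists (Rmin d1 d2). split. apply Rmin_pos; lra. intros w Hw.
  pose proof (Rmin_l d1 d2). pose proof (Rmin_r d1 d2).
  specialize (H1 w ltac:(lra)). specialize (H2 w ltac:(lra)).
  pose proof (Rmin_l 1 (e / (2 * A))) as M1. pose proof (Rmin_r 1 (e / (2 * A))) as M2.
  replace (f w * g w - f z * g z)%C with ((f w - f z) * g w + f z * (g w - g z))%C by ring.
  eapply Rle_lt_trans. apply Cmod_triangle. rewrite !Cmod_mult.
  assert (Hgw : Cmod (g w) <= B).
  { pose proof (Cmod_triangle (g w - g z) (g z)) as T. replace (g w - g z + g z)%C with (g w) in T by ring.
    unfold B. lra. }
  assert (Ha : Cmod (f w - f z) * (2 * B) < e).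
  { apply (Rmult_lt_reg_r (/ (2 * B))). apply Rinv_0_lt_compat; lra.
    rewrite Rmult_assoc, Rinv_r by lra. rewrite Rmult_1_r. exact H1. }
  assert (Hb : Cmod (g w - g z) * (2 * A) < e).
  { apply (Rmult_lt_reg_r (/ (2 * A))). apply Rinv_0_lt_compat; lra.
    rewrite Rmult_assoc, Rinv_r by lra. rewrite Rmult_1_r. unfold Rdiv in M2. lra. }
  pose proof (Cmod_ge_0 (f w - f z)). pose proof (Cmod_ge_0 (g w - g z)).
  pose proof (Cmod_ge_0 (g w)). pose proof (Cmod_ge_0 (f z)).
  assert (Cmod (f w - f z) * Cmod (g w) <= Cmod (f w - f z) * B) by (apply Rmult_le_compat_l; lra).
  assert (Cmod (f z) * Cmod (g w - g z) <= A * Cmod (g w - g z)) by (apply Rmult_le_compat_r; unfold A; lra).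
  nra.
Qed.

Lemma Ccont_scal (c : C) f z : Ccont f z -> Ccont (fun w => c * f w)%C z.
Proof. intros. apply Ccont_mult; auto. apply Ccont_const. Qed.

Lemma Ccont_inv g u : Ccont g u -> g u <> RtoC 0 -> Ccont (fun x => / g x)%C u.
Proof. intros H Hu. apply (Ccont_comp Cinv g); auto. eapply is_Cderive_Ccont. apply is_Cderive_Cinv; auto. Qed.

Lemma Ccont_sub_const (z u : C) : Ccont (fun x => x - z)%C u.
Proof. apply Ccont_minus. apply Ccont_id. apply Ccont_const. Qed.

Lemma Ccont_inv_sub z u : u <> z -> Ccont (fun x => / (x - z))%C u.
Proof. intros H. apply Ccont_inv. apply Ccont_sub_const. apply Cminus_neq_0; auto. Qed.

Definition RIntC (g : R -> C) (a b : R) : C := RInt (V:=C_R_CompleteNormedModule) g a b.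
Definition ex_RIntC (g : R -> C) (a b : R) := ex_RInt (V:=C_R_CompleteNormedModule) g a b.

Definition RCcont (g : R -> C) t := forall e, 0 < e -> exists d, 0 < d /\
  forall s, Rabs (s - t) < d -> Cmod (g s - g t) < e.

Lemma scal_C_R (r : R) (v : C) : @scal _ C_R_NormedModule r v = (RtoC r * v)%C.
Proof.
  destruct v as [x y]. unfold scal; simpl. unfold prod_scal. simpl. unfold Cmult, RtoC; simpl.
  f_equal; unfold scal; simpl; unfold mult; simpl; ring.
Qed.

Lemma norm_C_R (z : C) : @norm R_AbsRing C_R_NormedModule z = Cmod z.
Proof. rewrite <- Cmod_norm. reflexivity. Qed.

Lemma RCcont_continuous (g : R -> C) t :
  RCcont g t -> @continuous R_UniformSpace C_R_CompleteNormedModule g t.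
Proof.
  intros H. unfold continuous. apply filterlim_locally. intros eps.
  destruct (H eps (cond_pos eps)) as [d [Hd H']]. exists (mkposreal d Hd). intros s Hs.
  specialize (H' s Hs). pose proof (re_le_Cmod (g s - g t)%C). pose proof (Rabs_snd_le_Cmod (g s - g t)%C).
  split; simpl in *; unfold ball; simpl; unfold AbsRing_ball, abs, minus, plus, opp; simpl; lra.
Qed.

Lemma RCcont_fst g t : RCcont g t -> continuous (fun s => fst (g s)) t.
Proof.
  intros H. apply filterlim_locally. intros eps. destruct (H eps (cond_pos eps)) as [d [Hd H']].
  exists (mkposreal d Hd). intros s Hs. specialize (H' s Hs). pose proof (re_le_Cmod (g s - g t)%C).
  simpl in *. unfold ball; simpl; unfold AbsRing_ball, abs, minus, plus, opp; simpl. lra.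
Qed.

Lemma RCcont_snd g t : RCcont g t -> continuous (fun s => snd (g s)) t.
Proof.
  intros H. apply filterlim_locally. intros eps. destruct (H eps (cond_pos eps)) as [d [Hd H']].
  exists (mkposreal d Hd). intros s Hs. specialize (H' s Hs). pose proof (Rabs_snd_le_Cmod (g s - g t)%C).
  simpl in *. unfold ball; simpl; unfold AbsRing_ball, abs, minus, plus, opp; simpl. lra.
Qed.

Lemma ex_RIntC_cont g a b : a <= b -> (forall t, a <= t <= b -> RCcont g t) -> ex_RIntC g a b.
Proof.
  intros Hab H. apply ex_RInt_continuous. intros t Ht.
  rewrite Rmin_left, Rmax_right in Ht by lra. apply RCcont_continuous. auto.
Qed.

Lemma RIntC_plus g1 g2 a b : ex_RIntC g1 a b -> ex_RIntC g2 a b ->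
  RIntC (fun t => g1 t + g2 t)%C a b = (RIntC g1 a b + RIntC g2 a b)%C.
Proof. intros. apply (RInt_plus (V:=C_R_CompleteNormedModule)); auto. Qed.

Lemma RIntC_minus g1 g2 a b : ex_RIntC g1 a b -> ex_RIntC g2 a b ->
  RIntC (fun t => g1 t - g2 t)%C a b = (RIntC g1 a b - RIntC g2 a b)%C.
Proof. intros. apply (RInt_minus (V:=C_R_CompleteNormedModule)); auto. Qed.

Lemma is_RInt_C_Ci g a b l : is_RInt (V:=C_R_CompleteNormedModule) g a b l ->
  is_RInt (V:=C_R_CompleteNormedModule) (fun t => Ci * g t)%C a b (Ci * l)%C.
Proof.
  intros H.
  assert (H1 := is_RInt_fct_extend_fst (U:=R_NormedModule) (V:=R_NormedModule) g a b l H).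
  assert (H2 := is_RInt_fct_extend_snd (U:=R_NormedModule) (V:=R_NormedModule) g a b l H).
  assert (E : (Ci * l)%C = (opp (snd l), fst l)).
  { destruct l; unfold Ci, Cmult; simpl. unfold opp; simpl. f_equal; ring. }
  rewrite E. eapply is_RInt_ext.
  2:{ apply (is_RInt_fct_extend_pair (U:=R_NormedModule) (V:=R_NormedModule) (fun t => (opp (snd (g t)), fst (g t)))).
      apply (is_RInt_opp (V:=R_NormedModule)). exact H2. exact H1. }
  intros t _. unfold Ci, Cmult; simpl. unfold opp; simpl. f_equal; ring.
Qed.

(* The integral is only [R]-linear a priori; [C]-linearity follows by
   splitting [c = Re c + i Im c]. *)
Lemma is_RInt_C_scal (c : C) g a b l : is_RInt (V:=C_R_CompleteNormedModule) g a b l ->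
  is_RInt (V:=C_R_CompleteNormedModule) (fun t => c * g t)%C a b (c * l)%C.
Proof.
  intros H.
  assert (E : forall v : C, (c * v)%C = plus (scal (fst c) v) (scal (snd c) (Ci * v)%C)).
  { intros v. change (plus (scal (fst c) v) (scal (snd c) (Ci * v)%C)) with
      (@plus C_R_NormedModule (@scal _ C_R_NormedModule (fst c) v) (@scal _ C_R_NormedModule (snd c) (Ci * v)%C)).
    rewrite !scal_C_R. change (@plus C_R_NormedModule) with Cplus. destruct c as [c1 c2]. destruct v.
    unfold Ci, Cmult, Cplus, RtoC; simpl. f_equal; ring. }
  rewrite E. eapply is_RInt_ext. intros t _. symmetry. apply E.
  apply (is_RInt_plus (V:=C_R_CompleteNormedModule)); apply (is_RInt_scal (V:=C_R_CompleteNormedModule)).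
  exact H. apply is_RInt_C_Ci. exact H.
Qed.

Lemma RIntC_scal (c : C) g a b : ex_RIntC g a b -> RIntC (fun t => c * g t)%C a b = (c * RIntC g a b)%C.
Proof.
  intros H. apply (is_RInt_unique (V:=C_R_CompleteNormedModule)).
  apply is_RInt_C_scal, (RInt_correct (V:=C_R_CompleteNormedModule)), H.
Qed.

Lemma RIntC_Chasles g a b c : ex_RIntC g a b -> ex_RIntC g b c -> (RIntC g a b + RIntC g b c)%C = RIntC g a c.
Proof. intros. apply (RInt_Chasles (V:=C_R_CompleteNormedModule)); auto. Qed.

Lemma RIntC_ext g1 g2 a b : a <= b -> (forall t, a <= t <= b -> g1 t = g2 t) -> RIntC g1 a b = RIntC g2 a b.
Proof.
  intros Hab H. apply (RInt_ext (V:=C_R_CompleteNormedModule)). intros t Ht.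
  rewrite Rmin_left, Rmax_right in Ht by lra. apply H; lra.
Qed.

Lemma RIntC_norm_le g a b M : a <= b -> ex_RIntC g a b -> (forall t, a <= t <= b -> Cmod (g t) <= M) ->
  Cmod (RIntC g a b) <= (b - a) * M.
Proof.
  intros Hab Hex H. rewrite Cmod_norm.
  apply (norm_RInt_le (V:=C_R_NormedModule) g (fun _ => M) a b (RIntC g a b) ((b - a) * M) Hab).
  - intros t Ht. change (norm (g t)) with (@norm R_AbsRing C_R_NormedModule (g t)). rewrite norm_C_R. auto.
  - apply (RInt_correct (V:=C_R_CompleteNormedModule)). exact Hex.
  - apply (is_RInt_const (V:=R_NormedModule)).
Qed.

Lemma RIntC_fst g a b : ex_RIntC g a b -> fst (RIntC g a b) = RInt (fun t => fst (g t)) a b.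
Proof.
  intros H. symmetry. apply (is_RInt_unique (V:=R_CompleteNormedModule)).
  apply (is_RInt_fct_extend_fst (U:=R_NormedModule) (V:=R_NormedModule)).
  apply (RInt_correct (V:=C_R_CompleteNormedModule)). exact H.
Qed.

Lemma RIntC_snd g a b : ex_RIntC g a b -> snd (RIntC g a b) = RInt (fun t => snd (g t)) a b.
Proof.
  intros H. symmetry. apply (is_RInt_unique (V:=R_CompleteNormedModule)).
  apply (is_RInt_fct_extend_snd (U:=R_NormedModule) (V:=R_NormedModule)).
  apply (RInt_correct (V:=C_R_CompleteNormedModule)). exact H.
Qed.

Lemma RInt_lt_0 (h : R -> R) a b : a < b ->
  (forall t, a <= t <= b -> continuous h t) -> (forall t, a <= t <= b -> h t < 0) -> RInt h a b < 0.
Proof.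
  intros Hab Hc Hn.
  assert (Hex : ex_RInt h a b).
  { apply (ex_RInt_continuous (V:=R_CompleteNormedModule)). intros t Ht. rewrite Rmin_left, Rmax_right in Ht by lra. auto. }
  assert (0 < RInt (fun t => opp (h t)) a b).
  { apply RInt_gt_0; auto. intros t Ht. unfold opp; simpl. specialize (Hn t ltac:(lra)). lra.
    intros t Ht. apply (continuous_opp (V:=R_NormedModule)), Hc, Ht. }
  rewrite (RInt_opp (V:=R_CompleteNormedModule)) in H by exact Hex. unfold opp in H; simpl in H. lra.
Qed.

Lemma is_derive_RC_eps (g : R -> C) t l :
  (forall eps, 0 < eps -> exists d, 0 < d /\ forall h, Rabs h < d ->
     Cmod (g (t + h)%R - g t - RtoC h * l)%C <= eps * Rabs h) ->
  is_derive (K:=R_AbsRing) (V:=C_R_NormedModule) g t l.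
Proof.
  intros H. split. apply is_linear_scal_l.
  intros x Hx. apply (is_filter_lim_locally_unique (K:=R_AbsRing) (V:=AbsRing_NormedModule R_AbsRing)) in Hx. subst x.
  intros eps. apply (locally_le_locally_norm (K:=R_AbsRing) (V:=AbsRing_NormedModule R_AbsRing)).
  destruct (H eps (cond_pos eps)) as [d [Hd Hd']].
  exists (mkposreal d Hd). intros y Hy. unfold ball_norm in Hy. simpl in Hy.
  change (@norm R_AbsRing C_R_NormedModule (minus (minus (g y) (g t)) (scal (minus y t) l)) <= eps * abs (minus y t)).
  rewrite norm_C_R, scal_C_R. change (minus y t) with (y - t) in *.
  change (@minus C_R_NormedModule (@minus C_R_NormedModule (g y) (g t)) (RtoC (y - t) * l)%C)
    with (g y - g t - RtoC (y - t) * l)%C.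
  change (abs (y - t)) with (Rabs (y - t)). change (abs (y - t)) with (Rabs (y - t)) in Hy.
  specialize (Hd' (y - t) Hy). replace (t + (y - t)) with (y : R) in Hd' by (change R in y; ring). exact Hd'.
Qed.

Lemma RIntC_derive (G g : R -> C) a b : a <= b ->
  (forall t, a <= t <= b -> is_derive (K:=R_AbsRing) (V:=C_R_NormedModule) G t (g t)) ->
  (forall t, a <= t <= b -> RCcont g t) -> RIntC g a b = (G b - G a)%C.
Proof.
  intros Hab HD HC. apply (is_RInt_unique (V:=C_R_CompleteNormedModule)).
  apply (is_RInt_derive (V:=C_R_CompleteNormedModule)).
  - intros t Ht. rewrite Rmin_left, Rmax_right in Ht by lra. apply HD; auto.
  - intros t Ht. rewrite Rmin_left, Rmax_right in Ht by lra. apply RCcont_continuous; auto.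
Qed.

Lemma RCcont_horizontal (F : C -> C) x y : Ccont F (x, y) -> RCcont (fun t => F (t, y)) x.
Proof.
  intros H e He. destruct (H e He) as [d [Hd H']]. exists d; split; auto.
  intros s Hs. apply H'. replace ((s, y) - (x, y))%C with (RtoC (s - x)).
  rewrite Cmod_R; auto. unfold Cminus, Cplus, Copp, RtoC; simpl. f_equal; ring.
Qed.

Lemma RCcont_vertical (F : C -> C) x y : Ccont F (x, y) -> RCcont (fun t => F (x, t)) y.
Proof.
  intros H e He. destruct (H e He) as [d [Hd H']]. exists d; split; auto.
  intros s Hs. apply H'. replace ((x, s) - (x, y))%C with (RtoC (s - y) * Ci)%C.
  rewrite Cmod_mult, Cmod_R, Cmod_Ci, Rmult_1_r; auto.
  unfold Cminus, Cplus, Copp, Cmult, Ci, RtoC; simpl. f_equal; ring.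
Qed.

Lemma is_derive_horizontal (F : C -> C) x y l : is_Cderive F (x, y) l ->
  is_derive (K:=R_AbsRing) (V:=C_R_NormedModule) (fun t => F (t, y)) x l.
Proof.
  rewrite is_Cderive_eps. intros H. apply is_derive_RC_eps. intros eps He. destruct (H eps He) as [d [Hd H']].
  exists d. split; auto. intros h Hh. specialize (H' (RtoC h)). rewrite Cmod_R in H'.
  replace ((x, y) + RtoC h)%C with ((x + h, y) : C) in H'. apply H'; auto.
  unfold Cplus, RtoC; simpl. f_equal; ring.
Qed.

Lemma is_derive_vertical (F : C -> C) x y l : is_Cderive F (x, y) l ->
  is_derive (K:=R_AbsRing) (V:=C_R_NormedModule) (fun t => F (x, t)) y (Ci * l)%C.
Proof.
  rewrite is_Cderive_eps. intros H. apply is_derive_RC_eps. intros eps He. destruct (H eps He) as [d [Hd H']].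
  exists d. split; auto. intros h Hh. specialize (H' (RtoC h * Ci)%C).
  rewrite Cmod_mult, Cmod_R, Cmod_Ci, Rmult_1_r in H'.
  replace ((x, y) + RtoC h * Ci)%C with ((x, y + h) : C) in H'.
  replace (RtoC h * (Ci * l))%C with (RtoC h * Ci * l)%C by ring. apply H'; auto.
  unfold Cplus, Cmult, RtoC, Ci; simpl. f_equal; ring.
Qed.

(* Counterclockwise: bottom side, right side ([dz = i dt]), top and left
   sides reversed. *)
Definition rect_int (f : C -> C) (x1 x2 y1 y2 : R) : C :=
  (RIntC (fun t => f (t, y1)) x1 x2 - RIntC (fun t => f (t, y2)) x1 x2
   + Ci * (RIntC (fun t => f (x2, t)) y1 y2 - RIntC (fun t => f (x1, t)) y1 y2))%C.

Definition in_rect x1 x2 y1 y2 (z : C) := x1 <= fst z <= x2 /\ y1 <= snd z <= y2.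

Definition in_rect_interior x1 x2 y1 y2 (z : C) := x1 < fst z < x2 /\ y1 < snd z < y2.

Definition on_boundary (P : C -> Prop) x1 x2 y1 y2 :=
  (forall t, x1 <= t <= x2 -> P (t, y1) /\ P (t, y2)) /\
  (forall t, y1 <= t <= y2 -> P (x1, t) /\ P (x2, t)).

Definition Ccont_on_rect f x1 x2 y1 y2 := forall z, in_rect x1 x2 y1 y2 z -> Ccont f z.

Definition Ccont_on_boundary f x1 x2 y1 y2 := on_boundary (Ccont f) x1 x2 y1 y2.

Lemma on_boundary_of_rect (P : C -> Prop) x1 x2 y1 y2 : x1 <= x2 -> y1 <= y2 ->
  (forall z, in_rect x1 x2 y1 y2 z -> P z) -> on_boundary P x1 x2 y1 y2.
Proof. intros; split; intros; split; apply H1; unfold in_rect; simpl; lra. Qed.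

Lemma on_boundary_impl (P Q : C -> Prop) x1 x2 y1 y2 :
  (forall z, P z -> Q z) -> on_boundary P x1 x2 y1 y2 -> on_boundary Q x1 x2 y1 y2.
Proof. intros H [H1 H2]; split; intros t Ht; [destruct (H1 t Ht) | destruct (H2 t Ht)]; split; auto. Qed.

Lemma on_boundary_and (P Q : C -> Prop) x1 x2 y1 y2 :
  on_boundary P x1 x2 y1 y2 -> on_boundary Q x1 x2 y1 y2 -> on_boundary (fun z => P z /\ Q z) x1 x2 y1 y2.
Proof.
  intros [H1 H2] [H3 H4]; split; intros t Ht;
  [destruct (H1 t Ht), (H3 t Ht) | destruct (H2 t Ht), (H4 t Ht)]; split; split; auto.
Qed.

Lemma on_boundary_interior_neq x1 x2 y1 y2 z : x1 <= x2 -> y1 <= y2 ->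
  in_rect_interior x1 x2 y1 y2 z -> on_boundary (fun w => w <> z) x1 x2 y1 y2.
Proof. intros Hx Hy [H1 H2]. split; intros t Ht; split; intro E; subst z; simpl in *; lra. Qed.

Lemma Ccont_on_rect_boundary f x1 x2 y1 y2 : x1 <= x2 -> y1 <= y2 ->
  Ccont_on_rect f x1 x2 y1 y2 -> Ccont_on_boundary f x1 x2 y1 y2.
Proof. intros. apply on_boundary_of_rect; auto. Qed.

Lemma Ccont_on_rect_sub f x1 x2 y1 y2 a1 a2 b1 b2 : x1 <= a1 -> a2 <= x2 -> y1 <= b1 -> b2 <= y2 ->
  Ccont_on_rect f x1 x2 y1 y2 -> Ccont_on_rect f a1 a2 b1 b2.
Proof. intros ? ? ? ? H z [Hz1 Hz2]. apply H. split; lra. Qed.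

Lemma Ccont_on_boundary_mult f g x1 x2 y1 y2 :
  Ccont_on_boundary f x1 x2 y1 y2 -> Ccont_on_boundary g x1 x2 y1 y2 ->
  Ccont_on_boundary (fun z => f z * g z)%C x1 x2 y1 y2.
Proof. intros Hf Hg. generalize (on_boundary_and _ _ _ _ _ _ Hf Hg). apply on_boundary_impl. intros z [A B]. apply Ccont_mult; auto. Qed.

Lemma Ccont_on_boundary_minus f g x1 x2 y1 y2 :
  Ccont_on_boundary f x1 x2 y1 y2 -> Ccont_on_boundary g x1 x2 y1 y2 ->
  Ccont_on_boundary (fun z => f z - g z)%C x1 x2 y1 y2.
Proof. intros Hf Hg. generalize (on_boundary_and _ _ _ _ _ _ Hf Hg). apply on_boundary_impl. intros z [A B]. apply Ccont_minus; auto. Qed.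

Lemma Ccont_on_boundary_scal c f x1 x2 y1 y2 :
  Ccont_on_boundary f x1 x2 y1 y2 -> Ccont_on_boundary (fun z => c * f z)%C x1 x2 y1 y2.
Proof. apply on_boundary_impl. intros z A. apply Ccont_scal; auto. Qed.

Lemma ex_RIntC_horizontal f x1 x2 y1 y2 a b y : Ccont_on_rect f x1 x2 y1 y2 ->
  x1 <= a -> a <= b -> b <= x2 -> y1 <= y <= y2 -> ex_RIntC (fun t => f (t, y)) a b.
Proof. intros H. intros. apply ex_RIntC_cont; auto. intros t Ht. apply RCcont_horizontal, H. unfold in_rect; simpl; lra. Qed.

Lemma ex_RIntC_vertical f x1 x2 y1 y2 a b x : Ccont_on_rect f x1 x2 y1 y2 ->
  y1 <= a -> a <= b -> b <= y2 -> x1 <= x <= x2 -> ex_RIntC (fun t => f (x, t)) a b.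
Proof. intros H. intros. apply ex_RIntC_cont; auto. intros t Ht. apply RCcont_vertical, H. unfold in_rect; simpl; lra. Qed.

Section BoundaryIntegral.

Variables x1 x2 y1 y2 : R.
Hypothesis Hx : x1 <= x2.
Hypothesis Hy : y1 <= y2.

Lemma ex_RIntC_sides f : Ccont_on_boundary f x1 x2 y1 y2 ->
  ex_RIntC (fun t => f (t, y1)) x1 x2 /\ ex_RIntC (fun t => f (t, y2)) x1 x2 /\
  ex_RIntC (fun t => f (x1, t)) y1 y2 /\ ex_RIntC (fun t => f (x2, t)) y1 y2.
Proof.
  intros [H1 H2]. repeat split; apply ex_RIntC_cont; auto; intros t Ht.
  - apply RCcont_horizontal, H1; auto.
  - apply RCcont_horizontal, H1; auto.
  - apply RCcont_vertical, H2; auto.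
  - apply RCcont_vertical, H2; auto.
Qed.

Lemma rect_int_plus f g : Ccont_on_boundary f x1 x2 y1 y2 -> Ccont_on_boundary g x1 x2 y1 y2 ->
  rect_int (fun z => f z + g z)%C x1 x2 y1 y2 = (rect_int f x1 x2 y1 y2 + rect_int g x1 x2 y1 y2)%C.
Proof.
  intros Hf Hg. destruct (ex_RIntC_sides f Hf) as (A1 & A2 & A3 & A4).
  destruct (ex_RIntC_sides g Hg) as (B1 & B2 & B3 & B4).
  unfold rect_int. rewrite !(RIntC_plus (fun t => f _) (fun t => g _)); auto. ring.
Qed.

Lemma rect_int_minus f g : Ccont_on_boundary f x1 x2 y1 y2 -> Ccont_on_boundary g x1 x2 y1 y2 ->
  rect_int (fun z => f z - g z)%C x1 x2 y1 y2 = (rect_int f x1 x2 y1 y2 - rect_int g x1 x2 y1 y2)%C.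
Proof.
  intros Hf Hg. destruct (ex_RIntC_sides f Hf) as (A1 & A2 & A3 & A4).
  destruct (ex_RIntC_sides g Hg) as (B1 & B2 & B3 & B4).
  unfold rect_int. rewrite !(RIntC_minus (fun t => f _) (fun t => g _)); auto. ring.
Qed.

Lemma rect_int_scal c f : Ccont_on_boundary f x1 x2 y1 y2 ->
  rect_int (fun z => c * f z)%C x1 x2 y1 y2 = (c * rect_int f x1 x2 y1 y2)%C.
Proof.
  intros Hf. destruct (ex_RIntC_sides f Hf) as (A1 & A2 & A3 & A4).
  unfold rect_int. rewrite !(RIntC_scal c (fun t => f _)); auto. ring.
Qed.

Lemma rect_int_ext f g : on_boundary (fun z => f z = g z) x1 x2 y1 y2 ->
  rect_int f x1 x2 y1 y2 = rect_int g x1 x2 y1 y2.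
Proof.
  intros [H1 H2]. unfold rect_int.
  rewrite (RIntC_ext (fun t => f (t, y1)) (fun t => g (t, y1))) by (auto; intros; apply H1; auto).
  rewrite (RIntC_ext (fun t => f (t, y2)) (fun t => g (t, y2))) by (auto; intros; apply H1; auto).
  rewrite (RIntC_ext (fun t => f (x1, t)) (fun t => g (x1, t))) by (auto; intros; apply H2; auto).
  rewrite (RIntC_ext (fun t => f (x2, t)) (fun t => g (x2, t))) by (auto; intros; apply H2; auto).
  reflexivity.
Qed.

Lemma rect_int_norm_le f M : Ccont_on_boundary f x1 x2 y1 y2 ->
  on_boundary (fun z => Cmod (f z) <= M) x1 x2 y1 y2 ->
  Cmod (rect_int f x1 x2 y1 y2) <= 2 * ((x2 - x1) + (y2 - y1)) * M.
Proof.
  intros Hf [H1 H2]. destruct (ex_RIntC_sides f Hf) as (A1 & A2 & A3 & A4).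
  pose proof (RIntC_norm_le _ _ _ M Hx A1 ltac:(intros; apply H1; auto)).
  pose proof (RIntC_norm_le _ _ _ M Hx A2 ltac:(intros; apply H1; auto)).
  pose proof (RIntC_norm_le _ _ _ M Hy A3 ltac:(intros; apply H2; auto)).
  pose proof (RIntC_norm_le _ _ _ M Hy A4 ltac:(intros; apply H2; auto)).
  unfold rect_int. eapply Rle_trans. apply Cmod_triangle.
  eapply Rle_trans. apply Rplus_le_compat.
  - eapply Rle_trans. apply Cmod_triangle. rewrite Cmod_opp. apply Rle_refl.
  - rewrite Cmod_mult, Cmod_Ci, Rmult_1_l. eapply Rle_trans. apply Cmod_triangle. rewrite Cmod_opp. apply Rle_refl.
  - lra.
Qed.

Lemma rect_int_exact (F f : C -> C) :
  (forall z, in_rect x1 x2 y1 y2 z -> is_Cderive F z (f z)) -> Ccont_on_rect f x1 x2 y1 y2 ->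
  rect_int f x1 x2 y1 y2 = RtoC 0.
Proof.
  intros HD HC.
  assert (Hh : forall y, y1 <= y <= y2 -> RIntC (fun t => f (t, y)) x1 x2 = (F (x2, y) - F (x1, y))%C).
  { intros y Hyy. apply (RIntC_derive (fun t => F (t, y))); auto.
    - intros t Ht. apply is_derive_horizontal, HD. unfold in_rect; simpl; lra.
    - intros t Ht. apply RCcont_horizontal, HC. unfold in_rect; simpl; lra. }
  assert (Hv : forall x, x1 <= x <= x2 -> (Ci * RIntC (fun t => f (x, t)) y1 y2)%C = (F (x, y2) - F (x, y1))%C).
  { intros x Hxx. rewrite <- RIntC_scal by (eapply ex_RIntC_vertical; eauto; lra).
    apply (RIntC_derive (fun t => F (x, t))); auto.
    - intros t Ht. apply is_derive_vertical, HD. unfold in_rect; simpl; lra.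
    - intros t Ht. apply (RCcont_vertical (fun z => Ci * f z)%C), Ccont_scal, HC. unfold in_rect; simpl; lra. }
  unfold rect_int. rewrite !Hh by lra.
  replace (Ci * (RIntC (fun t => f (x2, t)) y1 y2 - RIntC (fun t => f (x1, t)) y1 y2))%C
    with (Ci * RIntC (fun t => f (x2, t)) y1 y2 - Ci * RIntC (fun t => f (x1, t)) y1 y2)%C by ring.
  rewrite !Hv by lra. ring.
Qed.

Lemma rect_int_affine (c0 c1 : C) : rect_int (fun z => c0 + c1 * z)%C x1 x2 y1 y2 = RtoC 0.
Proof.
  apply (rect_int_exact (fun z => c0 * z + (c1 / 2) * (z * z))%C).
  - intros z _. eapply is_Cderive_eq.
    + apply is_Cderive_plus; apply is_Cderive_scal; [apply is_Cderive_id | apply is_Cderive_mult; apply is_Cderive_id].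
    + cbv beta. field.
  - intros z _. apply Ccont_plus. apply Ccont_const. apply Ccont_scal. apply Ccont_id.
Qed.

End BoundaryIntegral.

Lemma rect_int_split_x f x1 x2 y1 y2 m : x1 <= m <= x2 -> y1 <= y2 -> Ccont_on_rect f x1 x2 y1 y2 ->
  rect_int f x1 x2 y1 y2 = (rect_int f x1 m y1 y2 + rect_int f m x2 y1 y2)%C.
Proof.
  intros Hm Hy H. unfold rect_int.
  rewrite <- (RIntC_Chasles (fun t => f (t, y1)) x1 m x2) by (eapply ex_RIntC_horizontal; eauto; lra).
  rewrite <- (RIntC_Chasles (fun t => f (t, y2)) x1 m x2) by (eapply ex_RIntC_horizontal; eauto; lra).
  ring.
Qed.

Lemma rect_int_split_y f x1 x2 y1 y2 m : x1 <= x2 -> y1 <= m <= y2 -> Ccont_on_rect f x1 x2 y1 y2 ->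
  rect_int f x1 x2 y1 y2 = (rect_int f x1 x2 y1 m + rect_int f x1 x2 m y2)%C.
Proof.
  intros Hx Hm H. unfold rect_int.
  rewrite <- (RIntC_Chasles (fun t => f (x1, t)) y1 m y2) by (eapply ex_RIntC_vertical; eauto; lra).
  rewrite <- (RIntC_Chasles (fun t => f (x2, t)) y1 m y2) by (eapply ex_RIntC_vertical; eauto; lra).
  ring.
Qed.

Lemma nonpos_of_le_small_multiples (c K e0 : R) : 0 < e0 ->
  (forall eps, 0 < eps < e0 -> c <= eps * K) -> c <= 0.
Proof.
  intros He0 H. destruct (Rle_lt_dec K 0) as [HK | HK].
  - specialize (H (e0 / 2) ltac:(lra)). nra.
  - destruct (Rle_lt_dec c 0) as [Hc | Hc]; auto.
    pose proof (Rmin_l (e0 / 2) (c / (2 * K))) as M1.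
    pose proof (Rmin_r (e0 / 2) (c / (2 * K))) as M2.
    set (eps := Rmin (e0 / 2) (c / (2 * K))) in *.
    assert (Heps : 0 < eps) by (apply Rmin_pos; [lra | apply Rdiv_lt_0_compat; lra]).
    assert (eps * K <= c / 2).
    { apply (Rmult_le_compat_r K) in M2; [|lra]. replace (c / (2 * K) * K) with (c / 2) in M2 by (field; lra). exact M2. }
    specialize (H eps ltac:(lra)). lra.
Qed.

Lemma Cmod_le_small_multiples_0 (u : C) (K e0 : R) : 0 < e0 ->
  (forall eps, 0 < eps < e0 -> Cmod u <= eps * K) -> u = RtoC 0.
Proof.
  intros He0 H. apply Cmod_eq_0. pose proof (Cmod_ge_0 u).
  pose proof (nonpos_of_le_small_multiples _ _ _ He0 H). lra.
Qed.

(** * Goursat's theorem for rectangles *)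

Lemma rect_int_near_derivative f zs l eps d x1 x2 y1 y2 :
  x1 <= x2 -> y1 <= y2 -> 0 <= eps -> Ccont_on_rect f x1 x2 y1 y2 -> in_rect x1 x2 y1 y2 zs ->
  (x2 - x1) + (y2 - y1) < d ->
  (forall h, Cmod h < d -> Cmod (f (zs + h) - f zs - h * l)%C <= eps * Cmod h) ->
  Cmod (rect_int f x1 x2 y1 y2) <= 2 * eps * (((x2 - x1) + (y2 - y1)) * ((x2 - x1) + (y2 - y1))).
Proof.
  intros Hx Hy He Hc [Hzx Hzy] Hsd Hdiff.
  set (s := (x2 - x1) + (y2 - y1)) in *.
  set (Lf := fun z => (f zs - zs * l + l * z)%C).
  assert (HLc : Ccont_on_boundary Lf x1 x2 y1 y2).
  { apply on_boundary_of_rect; auto. intros z _. unfold Lf. apply Ccont_plus; [apply Ccont_const | apply Ccont_scal, Ccont_id]. }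
  assert (Hfc : Ccont_on_boundary f x1 x2 y1 y2) by (apply Ccont_on_rect_boundary; auto).
  assert (E0 : rect_int f x1 x2 y1 y2 = rect_int (fun z => f z - Lf z)%C x1 x2 y1 y2).
  { rewrite rect_int_minus; auto. unfold Lf. rewrite rect_int_affine; auto. ring. }
  rewrite E0. replace (2 * eps * (s * s)) with (2 * s * (eps * s)) by ring.
  apply rect_int_norm_le; auto.
  - apply Ccont_on_boundary_minus; auto.
  - apply on_boundary_of_rect; auto. intros z [Hz1 Hz2].
    assert (Hzs : Cmod (z - zs) <= s).
    { eapply Rle_trans. apply Cmod_le_Rabs_fst_snd. unfold s. simpl.
      unfold Rabs. destruct (Rcase_abs _); destruct (Rcase_abs _); lra. }
    specialize (Hdiff (z - zs)%C ltac:(lra)). replace (zs + (z - zs))%C with z in Hdiff by ring.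
    unfold Lf. replace (f z - (f zs - zs * l + l * z))%C with (f z - f zs - (z - zs) * l)%C by ring.
    eapply Rle_trans. exact Hdiff. apply Rmult_le_compat_l; lra.
Qed.

Record rect := mkRect { rx1 : R; rx2 : R; ry1 : R; ry2 : R }.

Definition rint f r := rect_int f (rx1 r) (rx2 r) (ry1 r) (ry2 r).
Definition rect_wf r := rx1 r <= rx2 r /\ ry1 r <= ry2 r.
Definition Ccont_on f r := Ccont_on_rect f (rx1 r) (rx2 r) (ry1 r) (ry2 r).

Definition quadrant (k : nat) r :=
  let mx := (rx1 r + rx2 r) / 2 in
  let my := (ry1 r + ry2 r) / 2 in
  match k with
  | O => mkRect (rx1 r) mx (ry1 r) my
  | 1%nat => mkRect mx (rx2 r) (ry1 r) my
  | 2%nat => mkRect (rx1 r) mx my (ry2 r)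
  | _ => mkRect mx (rx2 r) my (ry2 r)
  end.

Lemma quadrant_spec k r : rect_wf r ->
  rect_wf (quadrant k r) /\ rx1 r <= rx1 (quadrant k r) /\ rx2 (quadrant k r) <= rx2 r /\
  ry1 r <= ry1 (quadrant k r) /\ ry2 (quadrant k r) <= ry2 r /\
  rx2 (quadrant k r) - rx1 (quadrant k r) = (rx2 r - rx1 r) / 2 /\
  ry2 (quadrant k r) - ry1 (quadrant k r) = (ry2 r - ry1 r) / 2.
Proof. unfold rect_wf. intros [H1 H2]. destruct k as [|[|[|k]]]; simpl; repeat split; lra. Qed.

Lemma rint_quadrants f r : rect_wf r -> Ccont_on f r ->
  rint f r = (rint f (quadrant 0 r) + rint f (quadrant 1 r) + rint f (quadrant 2 r) + rint f (quadrant 3 r))%C.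
Proof.
  unfold rect_wf, Ccont_on, rint. intros [H1 H2] H. simpl.
  set (mx := (rx1 r + rx2 r) / 2). set (my := (ry1 r + ry2 r) / 2).
  rewrite (rect_int_split_x _ _ _ _ _ mx) by (auto; unfold mx; lra).
  rewrite (rect_int_split_y _ (rx1 r) mx _ _ my) by (unfold mx, my in *; try lra; eapply Ccont_on_rect_sub; eauto; lra).
  rewrite (rect_int_split_y _ mx (rx2 r) _ _ my) by (unfold mx, my in *; try lra; eapply Ccont_on_rect_sub; eauto; lra).
  ring.
Qed.

Definition dominant_quadrant f r c :=
  (exists k, (k < 4)%nat /\ c = quadrant k r) /\ Cmod (rint f r) <= 4 * Cmod (rint f c).

Lemma exists_dominant_quadrant f r : rect_wf r -> Ccont_on f r -> exists c, dominant_quadrant f r c.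
Proof.
  intros Hw Hc. apply NNPP. intro N.
  assert (Hk : forall k, (k < 4)%nat -> 4 * Cmod (rint f (quadrant k r)) < Cmod (rint f r)).
  { intros k Hk. apply Rnot_le_lt. intro Hle. apply N. exists (quadrant k r). split; eauto. }
  pose proof (Hk 0%nat ltac:(lia)). pose proof (Hk 1%nat ltac:(lia)).
  pose proof (Hk 2%nat ltac:(lia)). pose proof (Hk 3%nat ltac:(lia)).
  rewrite (rint_quadrants f r Hw Hc) in H, H0, H1, H2.
  set (A := rint f (quadrant 0 r)) in *. set (B := rint f (quadrant 1 r)) in *.
  set (C0 := rint f (quadrant 2 r)) in *. set (D := rint f (quadrant 3 r)) in *.
  pose proof (Cmod_triangle (A + B + C0) D). pose proof (Cmod_triangle (A + B) C0).
  pose proof (Cmod_triangle A B). lra.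
Qed.

Definition next_rect f r := epsilon (inhabits r) (dominant_quadrant f r).

Fixpoint nested_rect f r0 n := match n with O => r0 | S n => next_rect f (nested_rect f r0 n) end.

Lemma pow2_gt_INR n : INR n < 2 ^ n.
Proof. induction n. simpl. lra. rewrite S_INR. simpl. pose proof (pow_R1_Rle 2 n ltac:(lra)). lra. Qed.

Section Goursat.

Variable f : C -> C.
Variables a1 a2 b1 b2 : R.
Hypothesis Ha : a1 <= a2.
Hypothesis Hb : b1 <= b2.
Hypothesis Hc : Ccont_on_rect f a1 a2 b1 b2.

Let R0 := mkRect a1 a2 b1 b2.
Let W := a2 - a1.
Let H := b2 - b1.

Definition nested_spec n r := rect_wf r /\ a1 <= rx1 r /\ rx2 r <= a2 /\ b1 <= ry1 r /\ ry2 r <= b2 /\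
  rx2 r - rx1 r = W / 2 ^ n /\ ry2 r - ry1 r = H / 2 ^ n /\
  Cmod (rint f R0) <= (2 ^ n * 2 ^ n) * Cmod (rint f r).

Lemma nested_spec_Ccont_on n r : nested_spec n r -> Ccont_on f r.
Proof. intros (Hw & ? & ? & ? & ? & _). eapply Ccont_on_rect_sub; [..|exact Hc]; auto. Qed.

Lemma next_rect_dominant n r : nested_spec n r -> dominant_quadrant f r (next_rect f r).
Proof.
  intros HI. unfold next_rect. apply epsilon_spec, exists_dominant_quadrant; [apply HI | eapply nested_spec_Ccont_on; eauto].
Qed.

Lemma nested_rect_spec n : nested_spec n (nested_rect f R0 n).
Proof.
  induction n.
  - unfold nested_spec, rect_wf, R0, W, H; simpl. repeat split; lra.
  - simpl nested_rect. pose proof (next_rect_dominant n _ IHn) as [[k [Hk E]] G].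
    destruct IHn as (Hw & I1 & I2 & I3 & I4 & I5 & I6 & I7).
    destruct (quadrant_spec k _ Hw) as (Hw' & C1 & C2 & C3 & C4 & C5 & C6). rewrite <- E in *.
    pose proof (pow_lt 2 n ltac:(lra)).
    unfold nested_spec. repeat split; try apply Hw'; try lra.
    + rewrite C5, I5. simpl. field. lra.
    + rewrite C6, I6. simpl. field. lra.
    + simpl. pose proof (Cmod_ge_0 (rint f (next_rect f (nested_rect f R0 n)))).
      assert (2 ^ n * 2 ^ n * Cmod (rint f (nested_rect f R0 n)) <=
              2 ^ n * 2 ^ n * (4 * Cmod (rint f (next_rect f (nested_rect f R0 n))))).
      { apply Rmult_le_compat_l. nra. exact G. }
      nra.
Qed.

Lemma nested_rect_mono m k :
  rx1 (nested_rect f R0 m) <= rx1 (nested_rect f R0 (m + k)) /\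
  rx2 (nested_rect f R0 (m + k)) <= rx2 (nested_rect f R0 m) /\
  ry1 (nested_rect f R0 m) <= ry1 (nested_rect f R0 (m + k)) /\
  ry2 (nested_rect f R0 (m + k)) <= ry2 (nested_rect f R0 m).
Proof.
  induction k. { rewrite Nat.add_0_r. lra. }
  replace (m + S k)%nat with (S (m + k)) by lia. simpl nested_rect.
  pose proof (nested_rect_spec (m + k)) as HI.
  pose proof (next_rect_dominant _ _ HI) as [[j [_ E]] _].
  destruct (quadrant_spec j _ (proj1 HI)) as (_ & C1 & C2 & C3 & C4 & _). rewrite <- E in *. lra.
Qed.

Lemma nested_rect_cross m n :
  rx1 (nested_rect f R0 m) <= rx2 (nested_rect f R0 n) /\ ry1 (nested_rect f R0 m) <= ry2 (nested_rect f R0 n).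
Proof.
  destruct (Nat.le_ge_cases m n) as [Hmn | Hmn];
  [destruct (Nat.le_exists_sub m n Hmn) as [k [Ek _]] | destruct (Nat.le_exists_sub n m Hmn) as [k [Ek _]]];
  rewrite Nat.add_comm in Ek; subst;
  [pose proof (nested_rect_mono m k); pose proof (nested_rect_spec (m + k)) as [[? ?] _]
  |pose proof (nested_rect_mono n k); pose proof (nested_rect_spec (n + k)) as [[? ?] _]]; lra.
Qed.

Lemma nested_rect_common_point : exists zs, forall n, in_rect (rx1 (nested_rect f R0 n)) (rx2 (nested_rect f R0 n))
  (ry1 (nested_rect f R0 n)) (ry2 (nested_rect f R0 n)) zs.
Proof.
  destruct (completeness (fun x => exists n, x = rx1 (nested_rect f R0 n))) as [xs [Hx1 Hx2]].
  { exists a2. intros x [n ->]. pose proof (nested_rect_spec n) as [[? ?] (_ & ? & _)]. lra. }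
  { exists (rx1 (nested_rect f R0 0)). exists 0%nat. reflexivity. }
  destruct (completeness (fun y => exists n, y = ry1 (nested_rect f R0 n))) as [ys [Hy1 Hy2]].
  { exists b2. intros x [n ->]. pose proof (nested_rect_spec n) as [[? ?] (_ & _ & _ & ? & _)]. lra. }
  { exists (ry1 (nested_rect f R0 0)). exists 0%nat. reflexivity. }
  exists (xs, ys). intros n. repeat split; simpl.
  - apply Hx1. exists n; auto.
  - apply Hx2. intros x [m ->]. apply nested_rect_cross.
  - apply Hy1. exists n; auto.
  - apply Hy2. intros x [m ->]. apply nested_rect_cross.
Qed.

(* The [n]-th rectangle carries at least [4^-n] of the integral and has
   perimeter [2^-n] of the original one, while near the common point [zs]
   the integrand is [o(|z - zs|)] after subtracting an affine function. *)
Lemma goursat_bound : (forall z, in_rect a1 a2 b1 b2 z -> ex_Cderive f z) ->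
  forall eps, 0 < eps -> Cmod (rint f R0) <= eps * (2 * ((W + H) * (W + H))).
Proof.
  intros HD eps He.
  destruct nested_rect_common_point as [zs Hl].
  assert (Hzs : in_rect a1 a2 b1 b2 zs) by (pose proof (Hl 0%nat) as Hl0; simpl in Hl0; exact Hl0).
  destruct (HD zs Hzs) as [l Hdl].
  rewrite is_Cderive_eps in Hdl. destruct (Hdl eps He) as [d [Hd Hdd]].
  destruct (INR_unbounded ((W + H) / d)) as [n Hn].
  pose proof (pow2_gt_INR n). pose proof (pow_lt 2 n ltac:(lra)) as HP.
  set (s := (W + H) / 2 ^ n).
  assert (Hsd : s < d).
  { unfold s. apply (Rmult_lt_reg_r (2 ^ n)); auto. unfold Rdiv. rewrite Rmult_assoc, Rinv_l by lra.
    rewrite Rmult_1_r. apply (Rmult_lt_reg_r (/ d)). apply Rinv_0_lt_compat; auto.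
    replace (d * 2 ^ n * / d) with (2 ^ n) by (field; lra). unfold Rdiv in Hn. lra. }
  set (r := nested_rect f R0 n).
  destruct (nested_rect_spec n) as ((Hw1 & Hw2) & _ & _ & _ & _ & I5 & I6 & I7). fold r in Hw1, Hw2, I5, I6, I7.
  assert (Hs : (rx2 r - rx1 r) + (ry2 r - ry1 r) = s) by (rewrite I5, I6; unfold s; field; lra).
  pose proof (rect_int_near_derivative f zs l eps d _ _ _ _ Hw1 Hw2 ltac:(lra)
    (nested_spec_Ccont_on n r (nested_rect_spec n)) (Hl n) ltac:(lra) Hdd) as Hbd.
  rewrite Hs in Hbd. fold (rint f r) in Hbd.
  eapply Rle_trans. exact I7.
  replace (eps * (2 * ((W + H) * (W + H)))) with (2 ^ n * 2 ^ n * (2 * eps * (s * s))) by (unfold s; field; lra).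
  apply Rmult_le_compat_l. nra. exact Hbd.
Qed.

End Goursat.

Theorem goursat f a1 a2 b1 b2 : a1 <= a2 -> b1 <= b2 ->
  (forall z, in_rect a1 a2 b1 b2 z -> ex_Cderive f z) -> rect_int f a1 a2 b1 b2 = RtoC 0.
Proof.
  intros Ha Hb HD.
  assert (Hc : Ccont_on_rect f a1 a2 b1 b2) by (intros z Hz; apply ex_Cderive_Ccont; auto).
  apply (Cmod_le_small_multiples_0 _ (2 * ((a2 - a1 + (b2 - b1)) * (a2 - a1 + (b2 - b1)))) 1 Rlt_0_1).
  intros eps [He _]. exact (goursat_bound f a1 a2 b1 b2 Ha Hb Hc HD eps He).
Qed.

(** * Cauchy's formula for rectangles *)

Lemma rect_int_around f x1 x2 y1 y2 p q u v :
  x1 <= p -> p <= q -> q <= x2 -> y1 <= u -> u <= v -> v <= y2 -> Ccont_on_rect f x1 x2 y1 y2 ->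
  rect_int f x1 x2 y1 y2 =
  (rect_int f x1 p y1 y2 + rect_int f p q y1 u + rect_int f p q u v + rect_int f p q v y2 + rect_int f q x2 y1 y2)%C.
Proof.
  intros. rewrite (rect_int_split_x f x1 x2 y1 y2 p) by (try lra; auto).
  rewrite (rect_int_split_x f p x2 y1 y2 q) by (try lra; eapply Ccont_on_rect_sub; eauto; lra).
  rewrite (rect_int_split_y f p q y1 y2 u) by (try lra; eapply Ccont_on_rect_sub; eauto; lra).
  rewrite (rect_int_split_y f p q u y2 v) by (try lra; eapply Ccont_on_rect_sub; eauto; lra).
  ring.
Qed.

Definition dist_boundary x1 x2 y1 y2 (z : C) :=
  Rmin (Rmin (fst z - x1) (x2 - fst z)) (Rmin (snd z - y1) (y2 - snd z)).

Lemma dist_boundary_spec x1 x2 y1 y2 z :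
  dist_boundary x1 x2 y1 y2 z <= fst z - x1 /\ dist_boundary x1 x2 y1 y2 z <= x2 - fst z /\
  dist_boundary x1 x2 y1 y2 z <= snd z - y1 /\ dist_boundary x1 x2 y1 y2 z <= y2 - snd z.
Proof.
  unfold dist_boundary.
  pose proof (Rmin_l (Rmin (fst z - x1) (x2 - fst z)) (Rmin (snd z - y1) (y2 - snd z))).
  pose proof (Rmin_r (Rmin (fst z - x1) (x2 - fst z)) (Rmin (snd z - y1) (y2 - snd z))).
  pose proof (Rmin_l (fst z - x1) (x2 - fst z)). pose proof (Rmin_r (fst z - x1) (x2 - fst z)).
  pose proof (Rmin_l (snd z - y1) (y2 - snd z)). pose proof (Rmin_r (snd z - y1) (y2 - snd z)). lra.
Qed.

Lemma dist_boundary_pos x1 x2 y1 y2 z : in_rect_interior x1 x2 y1 y2 z -> 0 < dist_boundary x1 x2 y1 y2 z.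
Proof. intros [[? ?] [? ?]]. unfold dist_boundary. repeat apply Rmin_pos; lra. Qed.

Lemma rect_int_punctured g x1 x2 y1 y2 z : in_rect_interior x1 x2 y1 y2 z ->
  Ccont_on_rect g x1 x2 y1 y2 ->
  (forall w, w <> z -> in_rect x1 x2 y1 y2 w -> ex_Cderive g w) ->
  rect_int g x1 x2 y1 y2 = RtoC 0.
Proof.
  intros Hs Hc HD. pose proof Hs as [[Hx1 Hx2] [Hy1 Hy2]].
  assert (Hz : in_rect x1 x2 y1 y2 z) by (unfold in_rect; lra).
  destruct (Hc z Hz 1 Rlt_0_1) as [d [Hd Hgz]].
  pose proof (dist_boundary_spec x1 x2 y1 y2 z) as Hdz.
  pose proof (dist_boundary_pos x1 x2 y1 y2 z Hs) as Hdz0.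
  set (b0 := Rmin (d / 4) (dist_boundary x1 x2 y1 y2 z)).
  assert (Hb0 : 0 < b0 /\ b0 <= d / 4 /\ b0 <= dist_boundary x1 x2 y1 y2 z).
  { unfold b0. pose proof (Rmin_l (d / 4) (dist_boundary x1 x2 y1 y2 z)).
    pose proof (Rmin_r (d / 4) (dist_boundary x1 x2 y1 y2 z)). split; [apply Rmin_pos|]; lra. }
  apply (Cmod_le_small_multiples_0 _ (8 * (Cmod (g z) + 1)) b0); [lra|]. intros b Hb.
  assert (Hout : forall p q u v, x1 <= p <= q -> q <= x2 -> y1 <= u <= v -> v <= y2 ->
    ~ in_rect p q u v z -> rect_int g p q u v = RtoC 0).
  { intros p q u v Hp Hq Hu Hv Hn. apply goursat; try lra. intros w Hw. apply HD.
    - intro E; subst w; contradiction.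
    - unfold in_rect in *; lra. }
  rewrite (rect_int_around g x1 x2 y1 y2 (fst z - b) (fst z + b) (snd z - b) (snd z + b)) by (auto; lra).
  rewrite (Hout x1 (fst z - b) y1 y2), (Hout (fst z - b) (fst z + b) y1 (snd z - b)),
    (Hout (fst z - b) (fst z + b) (snd z + b) y2), (Hout (fst z + b) x2 y1 y2)
    by (unfold in_rect; simpl; lra).
  replace (0 + 0 + rect_int g (fst z - b) (fst z + b) (snd z - b) (snd z + b) + 0 + 0)%C
    with (rect_int g (fst z - b) (fst z + b) (snd z - b) (snd z + b)) by ring.
  replace (b * (8 * (Cmod (g z) + 1))) with
    (2 * ((fst z + b - (fst z - b)) + (snd z + b - (snd z - b))) * (Cmod (g z) + 1)) by ring.
  apply rect_int_norm_le; try lra.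
  - apply Ccont_on_rect_boundary; try lra. eapply Ccont_on_rect_sub; eauto; lra.
  - apply on_boundary_of_rect; try lra. intros w [Hw1 Hw2].
    assert (Cmod (w - z) < d).
    { eapply Rle_lt_trans. apply Cmod_le_Rabs_fst_snd. simpl. unfold Rabs.
      destruct (Rcase_abs _); destruct (Rcase_abs _); lra. }
    specialize (Hgz w H). pose proof (Cmod_triangle (g w - g z) (g z)).
    replace (g w - g z + g z)%C with (g w) in H0 by ring. lra.
Qed.

Definition slope (f : C -> C) (z w : C) : C :=
  if Ceq_dec w z then C_derive f z else ((f w - f z) / (w - z))%C.

Lemma ex_Cderive_slope f z w : w <> z -> ex_Cderive f w -> ex_Cderive (slope f z) w.
Proof.
  intros Hwz [lw Hlw]. pose proof (Cminus_neq_0 _ _ Hwz) as Hwz'.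
  eexists. apply (is_Cderive_loc_ext (fun x => (f x - f z) / (x - z))%C _ w _ (Cmod (w - z))).
  - apply Cmod_gt_0, Hwz'.
  - intros x Hx. unfold slope. destruct (Ceq_dec x z) as [E|E]; auto.
    subst x. rewrite Cmod_sub_sym in Hx. lra.
  - apply is_Cderive_div; auto.
    + apply is_Cderive_minus; [exact Hlw | apply is_Cderive_const].
    + apply is_Cderive_minus; [apply is_Cderive_id | apply is_Cderive_const].
Qed.

Lemma Ccont_slope_center f z : ex_Cderive f z -> Ccont (slope f z) z.
Proof.
  intros [l Hl]. pose proof (is_C_derive_unique _ _ _ Hl) as Hl'.
  intros e He. rewrite is_Cderive_eps in Hl. destruct (Hl (e / 2)) as [d [Hd Hdd]]. lra.
  exists d. split; auto. intros w Hw. unfold slope. destruct (Ceq_dec z z) as [_|C]; [|congruence].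
  destruct (Ceq_dec w z) as [E|E].
  { replace (C_derive f z - C_derive f z)%C with (RtoC 0) by ring. rewrite Cmod_0. lra. }
  pose proof (Cminus_neq_0 _ _ E) as Hwz.
  specialize (Hdd (w - z)%C Hw). replace (z + (w - z))%C with w in Hdd by ring.
  rewrite Hl'. replace ((f w - f z) / (w - z) - l)%C with ((f w - f z - (w - z) * l) / (w - z))%C by (field; auto).
  rewrite Cmod_div by auto. pose proof (proj1 (Cmod_gt_0 _) Hwz).
  apply (Rmult_lt_reg_r (Cmod (w - z))); auto. unfold Rdiv. rewrite Rmult_assoc, Rinv_l by lra. nra.
Qed.

Lemma rect_int_cauchy f x1 x2 y1 y2 z : in_rect_interior x1 x2 y1 y2 z ->
  (forall w, in_rect x1 x2 y1 y2 w -> ex_Cderive f w) ->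
  rect_int (fun w => f w * / (w - z))%C x1 x2 y1 y2 = (f z * rect_int (fun w => / (w - z)) x1 x2 y1 y2)%C.
Proof.
  intros Hs HD. pose proof Hs as [[Hx1 Hx2] [Hy1 Hy2]].
  assert (Hzr : in_rect x1 x2 y1 y2 z) by (unfold in_rect; lra).
  assert (Hb : on_boundary (fun w => w <> z) x1 x2 y1 y2) by (apply on_boundary_interior_neq; auto; lra).
  assert (Hgc : Ccont_on_rect (slope f z) x1 x2 y1 y2).
  { intros w Hw. destruct (Ceq_dec w z) as [E|E].
    - subst. apply Ccont_slope_center, HD, Hzr.
    - apply ex_Cderive_Ccont, ex_Cderive_slope; auto. }
  assert (Hg0 : rect_int (slope f z) x1 x2 y1 y2 = RtoC 0).
  { apply (rect_int_punctured _ _ _ _ _ z Hs Hgc). intros w Hwz Hw. apply ex_Cderive_slope; auto. }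
  assert (Hk : Ccont_on_boundary (fun w => / (w - z))%C x1 x2 y1 y2).
  { generalize Hb. apply on_boundary_impl. intros w Hw. apply Ccont_inv_sub; auto. }
  assert (Hx : x1 <= x2) by lra. assert (Hy : y1 <= y2) by lra.
  rewrite (rect_int_ext x1 x2 y1 y2 Hx Hy _ (fun w => slope f z w + f z * / (w - z))%C).
  - rewrite rect_int_plus, Hg0, rect_int_scal; auto using Ccont_on_rect_boundary, Ccont_on_boundary_scal.
    ring.
  - generalize Hb. apply on_boundary_impl. intros w Hw. unfold slope.
    destruct (Ceq_dec w z) as [E|E]; [contradiction|].
    pose proof (Cminus_neq_0 _ _ E). field. auto.
Qed.

Lemma Cinv_snd_pos (u : C) : snd u < 0 -> 0 < snd (/ u)%C.
Proof.
  destruct u as [a b]. intros H. unfold Cinv; cbn [fst snd] in *.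
  assert (0 < a ^ 2 + b ^ 2) by nra. apply Rdiv_lt_0_compat; lra.
Qed.

Lemma Cinv_snd_neg (u : C) : 0 < snd u -> snd (/ u)%C < 0.
Proof.
  destruct u as [a b]. intros H. unfold Cinv; cbn [fst snd] in *.
  assert (0 < a ^ 2 + b ^ 2) by nra. assert (0 < b / (a ^ 2 + b ^ 2)) by (apply Rdiv_lt_0_compat; lra).
  unfold Rdiv in *. lra.
Qed.

Lemma Cinv_fst_pos (u : C) : 0 < fst u -> 0 < fst (/ u)%C.
Proof.
  destruct u as [a b]. intros H. unfold Cinv; cbn [fst snd] in *.
  assert (0 < a ^ 2 + b ^ 2) by nra. apply Rdiv_lt_0_compat; lra.
Qed.

Lemma Cinv_fst_neg (u : C) : fst u < 0 -> fst (/ u)%C < 0.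
Proof.
  destruct u as [a b]. intros H. unfold Cinv; cbn [fst snd] in *.
  assert (0 < a ^ 2 + b ^ 2) by nra. assert (0 < - a / (a ^ 2 + b ^ 2)) by (apply Rdiv_lt_0_compat; lra).
  unfold Rdiv in *. lra.
Qed.

(* Instead of computing the winding integral ([2 i pi]) we only need that it
   does not vanish: on each side of the rectangle the imaginary part of the
   integrand has a constant sign, and all four contributions have the same
   sign. *)
Lemma rect_int_inv_sub_neq_0 x1 x2 y1 y2 z : in_rect_interior x1 x2 y1 y2 z ->
  rect_int (fun w => / (w - z))%C x1 x2 y1 y2 <> RtoC 0.
Proof.
  intros [[Hx1 Hx2] [Hy1 Hy2]].
  assert (Hc : forall w, w <> z -> Ccont (fun w => / (w - z))%C w) by (intros; apply Ccont_inv_sub; auto).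
  assert (Hh : forall y, y <> snd z -> forall t, RCcont (fun t => / ((t, y) - z))%C t).
  { intros y Hyz t. apply (RCcont_horizontal (fun w => / (w - z))%C), Hc. intro E. subst z. simpl in Hyz. lra. }
  assert (Hv : forall x, x <> fst z -> forall t, RCcont (fun t => / ((x, t) - z))%C t).
  { intros x Hxz t. apply (RCcont_vertical (fun w => / (w - z))%C), Hc. intro E. subst z. simpl in Hxz. lra. }
  assert (Hy1z : y1 <> snd z) by lra. assert (Hy2z : y2 <> snd z) by lra.
  assert (Hx1z : x1 <> fst z) by lra. assert (Hx2z : x2 <> fst z) by lra.
  assert (A1 : 0 < RInt (fun t => snd (/ ((t, y1) - z))%C) x1 x2).
  { apply RInt_gt_0; [lra | |]; intros t _. apply Cinv_snd_pos. simpl. lra. apply RCcont_snd, Hh, Hy1z. }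
  assert (A2 : RInt (fun t => snd (/ ((t, y2) - z))%C) x1 x2 < 0).
  { apply RInt_lt_0; [lra | |]; intros t _. apply RCcont_snd, Hh, Hy2z. apply Cinv_snd_neg. simpl. lra. }
  assert (A3 : 0 < RInt (fun t => fst (/ ((x2, t) - z))%C) y1 y2).
  { apply RInt_gt_0; [lra | |]; intros t _. apply Cinv_fst_pos. simpl. lra. apply RCcont_fst, Hv, Hx2z. }
  assert (A4 : RInt (fun t => fst (/ ((x1, t) - z))%C) y1 y2 < 0).
  { apply RInt_lt_0; [lra | |]; intros t _. apply RCcont_fst, Hv, Hx1z. apply Cinv_fst_neg. simpl. lra. }
  rewrite <- RIntC_snd in A1, A2 by (apply ex_RIntC_cont; [lra | auto]).
  rewrite <- RIntC_fst in A3, A4 by (apply ex_RIntC_cont; [lra | auto]).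
  intro E. apply (f_equal snd) in E. unfold rect_int in E.
  destruct (RIntC (fun t => / ((t, y1) - z))%C x1 x2), (RIntC (fun t => / ((t, y2) - z))%C x1 x2),
    (RIntC (fun t => / ((x2, t) - z))%C y1 y2), (RIntC (fun t => / ((x1, t) - z))%C y1 y2).
  simpl in *. lra.
Qed.

(** * Differentiation under the boundary integral *)

Lemma RCcont_bounded g a b : a <= b -> (forall t, a <= t <= b -> RCcont g t) ->
  exists M, 0 <= M /\ forall t, a <= t <= b -> Cmod (g t) <= M.
Proof.
  intros Hab Hc. destruct (continuity_ab_maj (fun s => Cmod (g s)) a b Hab) as [m [Hm Hm']].
  - intros c Hcc eps He. destruct (Hc c Hcc eps He) as [d [Hd H']]. exists d. split; auto.
    intros s [_ Hs]. simpl in *. unfold R_dist in *. specialize (H' s Hs).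
    pose proof (Cmod_triangle_rev (g s) (g c)). pose proof (Cmod_triangle_rev (g c) (g s)).
    rewrite Cmod_sub_sym in H0. unfold Rabs. destruct (Rcase_abs _); lra.
  - exists (Cmod (g m)). split. apply Cmod_ge_0. auto.
Qed.

Lemma Ccont_on_boundary_bounded phi x1 x2 y1 y2 : x1 <= x2 -> y1 <= y2 -> Ccont_on_boundary phi x1 x2 y1 y2 ->
  exists M, 0 <= M /\ on_boundary (fun u => Cmod (phi u) <= M) x1 x2 y1 y2.
Proof.
  intros Hx Hy [H1 H2].
  destruct (RCcont_bounded (fun t => phi (t, y1)) x1 x2 Hx) as [M1 [P1 B1]]. intros t Ht; apply RCcont_horizontal, H1; auto.
  destruct (RCcont_bounded (fun t => phi (t, y2)) x1 x2 Hx) as [M2 [P2 B2]]. intros t Ht; apply RCcont_horizontal, H1; auto.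
  destruct (RCcont_bounded (fun t => phi (x1, t)) y1 y2 Hy) as [M3 [P3 B3]]. intros t Ht; apply RCcont_vertical, H2; auto.
  destruct (RCcont_bounded (fun t => phi (x2, t)) y1 y2 Hy) as [M4 [P4 B4]]. intros t Ht; apply RCcont_vertical, H2; auto.
  exists (M1 + M2 + M3 + M4). split. lra. split; intros t Ht; split.
  - specialize (B1 t Ht); lra.
  - specialize (B2 t Ht); lra.
  - specialize (B3 t Ht); lra.
  - specialize (B4 t Ht); lra.
Qed.

Lemma is_Cderive_rect_int_param (phi : C -> C) (K : C -> C -> C) (K1 : C -> C) x1 x2 y1 y2 z r Cc :
  x1 <= x2 -> y1 <= y2 -> 0 < r -> 0 <= Cc -> Ccont_on_boundary phi x1 x2 y1 y2 ->
  (forall w, Cmod (w - z) < r -> Ccont_on_boundary (fun u => phi u * K u w)%C x1 x2 y1 y2) ->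
  Ccont_on_boundary (fun u => phi u * K1 u)%C x1 x2 y1 y2 ->
  on_boundary (fun u => forall h, Cmod h < r ->
    Cmod (K u (z + h) - K u z - h * K1 u)%C <= Cc * (Cmod h * Cmod h)) x1 x2 y1 y2 ->
  is_Cderive (fun w => rect_int (fun u => phi u * K u w)%C x1 x2 y1 y2) z
    (rect_int (fun u => phi u * K1 u)%C x1 x2 y1 y2).
Proof.
  intros Hx Hy Hr HC Hphi HK HK1 HB.
  destruct (Ccont_on_boundary_bounded phi x1 x2 y1 y2 Hx Hy Hphi) as [Mp [HMp HBp]].
  apply is_Cderive_eps. intros eps He.
  set (A := 2 * ((x2 - x1) + (y2 - y1)) * Mp * Cc).
  assert (HA : 0 <= A).
  { unfold A. repeat apply Rmult_le_pos; lra. }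
  exists (Rmin r (eps / (A + 1))). split. apply Rmin_pos; auto. apply Rdiv_lt_0_compat; lra.
  intros h Hh. pose proof (Rmin_l r (eps / (A + 1))) as M1. pose proof (Rmin_r r (eps / (A + 1))) as M2.
  assert (Hzh : Cmod (z + h - z) < r) by (replace (z + h - z)%C with h by ring; lra).
  assert (Hz0 : Cmod (z - z) < r) by (replace (z - z)%C with (RtoC 0) by ring; rewrite Cmod_0; lra).
  pose proof (HK _ Hzh) as B1. pose proof (HK _ Hz0) as B0. pose proof (Cmod_ge_0 h) as Hh0.
  rewrite <- (rect_int_scal _ _ _ _ Hx Hy h), <- !rect_int_minus; auto using Ccont_on_boundary_minus, Ccont_on_boundary_scal.
  apply Rle_trans with (2 * ((x2 - x1) + (y2 - y1)) * (Mp * (Cc * (Cmod h * Cmod h)))).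
  - apply rect_int_norm_le; auto using Ccont_on_boundary_minus, Ccont_on_boundary_scal.
    generalize (on_boundary_and _ _ _ _ _ _ HBp HB). apply on_boundary_impl. intros u [Hu1 Hu2].
    replace (phi u * K u (z + h) - phi u * K u z - h * (phi u * K1 u))%C
      with (phi u * (K u (z + h) - K u z - h * K1 u))%C by ring.
    rewrite Cmod_mult. apply Rmult_le_compat; auto using Cmod_ge_0. apply Hu2. lra.
  - assert (Hhq : Cmod h * (A + 1) <= eps).
    { apply (Rmult_le_reg_r (/ (A + 1))). apply Rinv_0_lt_compat; lra.
      rewrite Rmult_assoc, Rinv_r by lra. unfold Rdiv in M2. lra. }
    replace (2 * ((x2 - x1) + (y2 - y1)) * (Mp * (Cc * (Cmod h * Cmod h)))) with (A * Cmod h * Cmod h) by (unfold A; ring).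
    nra.
Qed.

Lemma Rdiv_le_den (n b D : R) : 0 <= n -> 0 < b -> b <= D -> n / D <= n / b.
Proof. intros Hn Hb HbD. unfold Rdiv. apply Rmult_le_compat_l; auto. apply Rinv_le_contravar; auto. Qed.

Lemma inv_sub_taylor_bound (v h : C) d : 0 < d -> d <= Cmod v -> Cmod h < d / 2 ->
  Cmod (/ (v - h) - / v - h * / (v * v))%C <= 2 / (d * d * d) * (Cmod h * Cmod h).
Proof.
  intros Hd Hv Hh. pose proof (Cmod_ge_0 h). pose proof (Cmod_triangle_rev v h).
  assert (Hv0 : v <> RtoC 0) by (apply Cmod_gt_0; lra).
  assert (Hvh : (v - h)%C <> RtoC 0) by (apply Cmod_gt_0; lra).
  replace (/ (v - h) - / v - h * / (v * v))%C with (h * h / (v * v * (v - h)))%C by (field; auto).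
  rewrite Cmod_div, !Cmod_mult by (repeat apply Cmult_neq_0; auto).
  replace (2 / (d * d * d) * (Cmod h * Cmod h)) with (Cmod h * Cmod h / (d * d * (d / 2))) by (field; lra).
  apply Rdiv_le_den. nra. repeat apply Rmult_lt_0_compat; lra.
  apply Rmult_le_compat; try lra. nra. nra.
Qed.

Lemma inv_sub_sqr_taylor_bound (v h : C) d : 0 < d -> d <= Cmod v -> Cmod h < d / 2 ->
  Cmod (/ ((v - h) * (v - h)) - / (v * v) - h * (2 / (v * v * v)))%C <= 16 / (d * d * d * d) * (Cmod h * Cmod h).
Proof.
  intros Hd Hv Hh. pose proof (Cmod_ge_0 h). pose proof (Cmod_triangle_rev v h).
  assert (Hv0 : v <> RtoC 0) by (apply Cmod_gt_0; lra).
  assert (Hvh : (v - h)%C <> RtoC 0) by (apply Cmod_gt_0; lra).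
  replace (/ ((v - h) * (v - h)) - / (v * v) - h * (2 / (v * v * v)))%C
    with (h * h * ((3 * v - 2 * h) / v) / (v * v * ((v - h) * (v - h))))%C by (field; auto).
  assert (HN : Cmod ((3 * v - 2 * h) / v) <= 4).
  { replace ((3 * v - 2 * h) / v)%C with (3 - 2 * (h / v))%C by (field; auto).
    eapply Rle_trans. apply (Cmod_triangle 3 (- (2 * (h / v)))).
    rewrite Cmod_opp, Cmod_mult, Cmod_div by auto. rewrite !Cmod_R, !Rabs_right by lra.
    assert (Cmod h / Cmod v <= 1 / 2).
    { apply (Rmult_le_reg_r (Cmod v)); [lra|]. unfold Rdiv. rewrite Rmult_assoc, Rinv_l by lra. lra. }
    lra. }
  rewrite Cmod_div, !Cmod_mult by (repeat apply Cmult_neq_0; auto).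
  replace (16 / (d * d * d * d) * (Cmod h * Cmod h)) with (Cmod h * Cmod h * 4 / (d * d * ((d / 2) * (d / 2)))) by (field; lra).
  eapply Rle_trans. apply Rmult_le_compat_r. apply Rlt_le, Rinv_0_lt_compat. repeat apply Rmult_lt_0_compat; lra.
  apply Rmult_le_compat_l. nra. exact HN.
  apply Rdiv_le_den. nra. repeat apply Rmult_lt_0_compat; lra.
  apply Rmult_le_compat; nra.
Qed.

Definition cauchy_int (phi : C -> C) x1 x2 y1 y2 (w : C) :=
  rect_int (fun u => phi u * / (u - w))%C x1 x2 y1 y2.
Definition cauchy_int2 (phi : C -> C) x1 x2 y1 y2 (w : C) :=
  rect_int (fun u => phi u * / ((u - w) * (u - w)))%C x1 x2 y1 y2.
Definition cauchy_int3 (phi : C -> C) x1 x2 y1 y2 (w : C) :=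
  rect_int (fun u => phi u * (2 / ((u - w) * (u - w) * (u - w))))%C x1 x2 y1 y2.

Lemma on_boundary_dist x1 x2 y1 y2 z : x1 <= x2 -> y1 <= y2 ->
  on_boundary (fun u => dist_boundary x1 x2 y1 y2 z <= Cmod (u - z)) x1 x2 y1 y2.
Proof.
  intros Hx Hy. pose proof (dist_boundary_spec x1 x2 y1 y2 z) as D.
  split; intros t Ht; split.
  1, 2: eapply Rle_trans; [| apply Rabs_snd_le_Cmod]; simpl; unfold Rabs; destruct (Rcase_abs _); lra.
  1, 2: eapply Rle_trans; [| apply re_le_Cmod]; simpl; unfold Rabs; destruct (Rcase_abs _); lra.
Qed.

Lemma on_boundary_neq_near x1 x2 y1 y2 z w : x1 <= x2 -> y1 <= y2 ->
  Cmod (w - z) < dist_boundary x1 x2 y1 y2 z -> on_boundary (fun u => u <> w) x1 x2 y1 y2.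
Proof.
  intros Hx Hy Hw. generalize (on_boundary_dist x1 x2 y1 y2 z Hx Hy). apply on_boundary_impl.
  intros u Hu E. subst u. lra.
Qed.

Lemma in_rect_interior_near x1 x2 y1 y2 z u : in_rect_interior x1 x2 y1 y2 z ->
  Cmod (u - z) < dist_boundary x1 x2 y1 y2 z -> in_rect_interior x1 x2 y1 y2 u.
Proof.
  intros Hs Hu. pose proof (dist_boundary_spec x1 x2 y1 y2 z).
  pose proof (re_le_Cmod (u - z)%C). pose proof (Rabs_snd_le_Cmod (u - z)%C). simpl in *.
  unfold Rabs in *. destruct (Rcase_abs _); destruct (Rcase_abs _); unfold in_rect_interior in *; lra.
Qed.

Lemma Ccont_inv_sub_sqr z u : u <> z -> Ccont (fun x => / ((x - z) * (x - z)))%C u.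
Proof.
  intros H. apply Ccont_inv. apply Ccont_mult; apply Ccont_sub_const.
  apply Cmult_neq_0; apply Cminus_neq_0; auto.
Qed.

Lemma Ccont_inv_sub_cube z u : u <> z -> Ccont (fun x => 2 / ((x - z) * (x - z) * (x - z)))%C u.
Proof.
  intros H. apply Ccont_scal, Ccont_inv.
  - repeat apply Ccont_mult; apply Ccont_sub_const.
  - repeat apply Cmult_neq_0; apply Cminus_neq_0; auto.
Qed.

Section CauchyIntegrals.

Variables x1 x2 y1 y2 : R.
Hypothesis Hx : x1 <= x2.
Hypothesis Hy : y1 <= y2.
Variable phi : C -> C.
Hypothesis Hphi : Ccont_on_boundary phi x1 x2 y1 y2.

Lemma Ccont_on_boundary_kernel (k : C -> C -> C) z :
  in_rect_interior x1 x2 y1 y2 z -> (forall w u, u <> w -> Ccont (fun x => k x w) u) ->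
  forall w, Cmod (w - z) < dist_boundary x1 x2 y1 y2 z -> Ccont_on_boundary (fun u => phi u * k u w)%C x1 x2 y1 y2.
Proof.
  intros Hz Hk w Hw. apply Ccont_on_boundary_mult; auto.
  generalize (on_boundary_neq_near x1 x2 y1 y2 z w Hx Hy Hw). apply on_boundary_impl. auto.
Qed.

Lemma is_Cderive_cauchy_int z : in_rect_interior x1 x2 y1 y2 z ->
  is_Cderive (cauchy_int phi x1 x2 y1 y2) z (cauchy_int2 phi x1 x2 y1 y2 z).
Proof.
  intros Hs. set (d := dist_boundary x1 x2 y1 y2 z). assert (Hd : 0 < d) by (apply dist_boundary_pos; auto).
  assert (Hzz : Cmod (z - z) < d) by (replace (z - z)%C with (RtoC 0) by ring; rewrite Cmod_0; lra).
  apply (is_Cderive_rect_int_param phi (fun u w => / (u - w))%C (fun u => / ((u - z) * (u - z)))%C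
    _ _ _ _ z (d / 2) (2 / (d * d * d))); auto.
  - lra.
  - apply Rlt_le, Rdiv_lt_0_compat; [lra | repeat apply Rmult_lt_0_compat; lra].
  - intros w Hw. apply (Ccont_on_boundary_kernel (fun u w => / (u - w))%C z Hs); [intros; apply Ccont_inv_sub; auto | fold d; lra].
  - refine (Ccont_on_boundary_kernel (fun u w => / ((u - w) * (u - w)))%C z Hs _ z Hzz).
    intros; apply Ccont_inv_sub_sqr; auto.
  - generalize (on_boundary_dist x1 x2 y1 y2 z Hx Hy). apply on_boundary_impl. intros u Hu h Hh.
    replace (u - (z + h))%C with ((u - z) - h)%C by ring. apply inv_sub_taylor_bound; auto.
Qed.

Lemma is_Cderive_cauchy_int2 z : in_rect_interior x1 x2 y1 y2 z ->
  is_Cderive (cauchy_int2 phi x1 x2 y1 y2) z (cauchy_int3 phi x1 x2 y1 y2 z).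
Proof.
  intros Hs. set (d := dist_boundary x1 x2 y1 y2 z). assert (Hd : 0 < d) by (apply dist_boundary_pos; auto).
  assert (Hzz : Cmod (z - z) < d) by (replace (z - z)%C with (RtoC 0) by ring; rewrite Cmod_0; lra).
  apply (is_Cderive_rect_int_param phi (fun u w => / ((u - w) * (u - w)))%C
    (fun u => 2 / ((u - z) * (u - z) * (u - z)))%C _ _ _ _ z (d / 2) (16 / (d * d * d * d))); auto.
  - lra.
  - apply Rlt_le, Rdiv_lt_0_compat; [lra | repeat apply Rmult_lt_0_compat; lra].
  - intros w Hw. apply (Ccont_on_boundary_kernel (fun u w => / ((u - w) * (u - w)))%C z Hs); [intros; apply Ccont_inv_sub_sqr; auto | fold d; lra].
  - refine (Ccont_on_boundary_kernel (fun u w => 2 / ((u - w) * (u - w) * (u - w)))%C z Hs _ z Hzz).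
    intros; apply Ccont_inv_sub_cube; auto.
  - generalize (on_boundary_dist x1 x2 y1 y2 z Hx Hy). apply on_boundary_impl. intros u Hu h Hh.
    replace (u - (z + h))%C with ((u - z) - h)%C by ring. apply inv_sub_sqr_taylor_bound; auto.
Qed.

End CauchyIntegrals.

Section HolomorphicOnRectangle.

Variable f : C -> C.
Variables x1 x2 y1 y2 : R.
Hypothesis Hx : x1 <= x2.
Hypothesis Hy : y1 <= y2.
Hypothesis HD : forall u, in_rect x1 x2 y1 y2 u -> ex_Cderive f u.

Let one := fun _ : C => RtoC 1.
Let index := cauchy_int one x1 x2 y1 y2.

Lemma Ccont_on_boundary_holo : Ccont_on_boundary f x1 x2 y1 y2.
Proof. apply Ccont_on_rect_boundary; auto. intros u Hu. apply ex_Cderive_Ccont; auto. Qed.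

Lemma Ccont_on_boundary_one : Ccont_on_boundary one x1 x2 y1 y2.
Proof. apply on_boundary_of_rect; auto. intros; apply Ccont_const. Qed.

Lemma index_neq_0 w : in_rect_interior x1 x2 y1 y2 w -> index w <> RtoC 0.
Proof.
  intros Hw. unfold index, cauchy_int, one.
  rewrite (rect_int_ext _ _ _ _ Hx Hy _ (fun u => / (u - w))%C).
  - apply rect_int_inv_sub_neq_0; auto.
  - apply on_boundary_of_rect; auto. intros u _. ring.
Qed.

Lemma cauchy_repr w : in_rect_interior x1 x2 y1 y2 w -> f w = (cauchy_int f x1 x2 y1 y2 w / index w)%C.
Proof.
  intros Hw. pose proof (index_neq_0 w Hw) as Hi.
  unfold cauchy_int at 1. rewrite rect_int_cauchy by auto.
  unfold index, cauchy_int, one in *.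
  rewrite (rect_int_ext _ _ _ _ Hx Hy (fun u => 1 * / (u - w))%C (fun u => / (u - w))%C) in *
    by (apply on_boundary_of_rect; auto; intros; ring).
  field. exact Hi.
Qed.

Definition repr_deriv w := ((cauchy_int2 f x1 x2 y1 y2 w * index w - cauchy_int f x1 x2 y1 y2 w * cauchy_int2 one x1 x2 y1 y2 w)
   / (index w * index w))%C.

Lemma is_Cderive_interior w : in_rect_interior x1 x2 y1 y2 w -> is_Cderive f w (repr_deriv w).
Proof.
  intros Hw. pose proof (dist_boundary_pos _ _ _ _ _ Hw) as Hd.
  apply (is_Cderive_loc_ext (fun u => cauchy_int f x1 x2 y1 y2 u / index u)%C f w _ _ Hd).
  - intros u Hu. symmetry. apply cauchy_repr. eapply in_rect_interior_near; eauto.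
  - apply is_Cderive_div; [apply is_Cderive_cauchy_int; auto using Ccont_on_boundary_holo ..| apply index_neq_0; auto].
    apply Ccont_on_boundary_one.
Qed.

(* Cauchy's representation expresses [f'] through integrals that are
   themselves differentiable in the parameter. *)
Lemma ex_Cderive_C_derive_interior z : in_rect_interior x1 x2 y1 y2 z -> ex_Cderive (C_derive f) z.
Proof.
  intros Hz. pose proof (dist_boundary_pos _ _ _ _ _ Hz) as Hd.
  pose proof Ccont_on_boundary_holo. pose proof Ccont_on_boundary_one.
  eexists. apply (is_Cderive_loc_ext repr_deriv (C_derive f) z _ _ Hd).
  - intros u Hu. symmetry. apply is_C_derive_unique, is_Cderive_interior. eapply in_rect_interior_near; eauto.
  - unfold repr_deriv. apply is_Cderive_div.
    + apply is_Cderive_minus; apply is_Cderive_mult.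
      * apply is_Cderive_cauchy_int2; auto.
      * apply is_Cderive_cauchy_int; auto.
      * apply is_Cderive_cauchy_int; auto.
      * apply is_Cderive_cauchy_int2; auto.
    + apply is_Cderive_mult; apply is_Cderive_cauchy_int; auto.
    + apply Cmult_neq_0; apply index_neq_0; auto.
Qed.

Lemma holo_factor_zero z : in_rect_interior x1 x2 y1 y2 z -> f z = RtoC 0 ->
  exists h, (forall w, Cmod (w - z) < dist_boundary x1 x2 y1 y2 z -> f w = ((w - z) * h w)%C) /\
    h z = C_derive f z /\ ex_Cderive h z.
Proof.
  intros Hz Hfz. pose proof Ccont_on_boundary_holo as Hfc.
  set (g := fun u => (f u / (u - z))%C).
  assert (Hbz : on_boundary (fun u => u <> z) x1 x2 y1 y2) by (apply on_boundary_interior_neq; auto).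
  assert (Hgc : Ccont_on_boundary g x1 x2 y1 y2).
  { apply Ccont_on_boundary_mult; auto. generalize Hbz. apply on_boundary_impl. intros; apply Ccont_inv_sub; auto. }
  assert (Hiz : cauchy_int f x1 x2 y1 y2 z = RtoC 0).
  { pose proof (cauchy_repr z Hz) as E. pose proof (index_neq_0 z Hz).
    rewrite Hfz in E. replace (cauchy_int f x1 x2 y1 y2 z) with (cauchy_int f x1 x2 y1 y2 z / index z * index z)%C
      by (field; auto). rewrite <- E. ring. }
  exists (fun w => cauchy_int g x1 x2 y1 y2 w / index w)%C. split; [|split].
  - intros w Hw. pose proof (in_rect_interior_near _ _ _ _ _ _ Hz Hw) as Hwi.
    pose proof (on_boundary_neq_near x1 x2 y1 y2 z w Hx Hy Hw) as Hbw.
    assert (E : (cauchy_int f x1 x2 y1 y2 w - cauchy_int f x1 x2 y1 y2 z)%C = ((w - z) * cauchy_int g x1 x2 y1 y2 w)%C).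
    { assert (Hk : forall v, on_boundary (fun u => u <> v) x1 x2 y1 y2 -> forall phi,
        Ccont_on_boundary phi x1 x2 y1 y2 -> Ccont_on_boundary (fun u => phi u * / (u - v))%C x1 x2 y1 y2).
      { intros v Hv phi Hp. apply Ccont_on_boundary_mult; auto.
        generalize Hv. apply on_boundary_impl. intros; apply Ccont_inv_sub; auto. }
      unfold cauchy_int.
      rewrite <- (rect_int_minus _ _ _ _ Hx Hy _ _ (Hk w Hbw f Hfc) (Hk z Hbz f Hfc)),
        <- (rect_int_scal _ _ _ _ Hx Hy _ _ (Hk w Hbw g Hgc)).
      apply rect_int_ext; auto. generalize (on_boundary_and _ _ _ _ _ _ Hbw Hbz). apply on_boundary_impl.
      intros u [Hu1 Hu2]. unfold g. pose proof (Cminus_neq_0 _ _ Hu1). pose proof (Cminus_neq_0 _ _ Hu2).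
      field. auto. }
    rewrite Hiz in E. replace (cauchy_int f x1 x2 y1 y2 w - 0)%C with (cauchy_int f x1 x2 y1 y2 w) in E by ring.
    cbv beta. rewrite (cauchy_repr w Hwi), E.
    field. apply index_neq_0; auto.
  - pose proof (index_neq_0 z Hz).
    rewrite (is_C_derive_unique _ _ _ (is_Cderive_interior z Hz)). unfold repr_deriv. rewrite Hiz.
    replace (cauchy_int g x1 x2 y1 y2 z) with (cauchy_int2 f x1 x2 y1 y2 z).
    + field. auto.
    + apply rect_int_ext; auto. generalize Hbz. apply on_boundary_impl. intros u Hu. unfold g.
      pose proof (Cminus_neq_0 _ _ Hu). field. auto.
  - eexists. apply is_Cderive_div; [apply is_Cderive_cauchy_int; auto ..| apply index_neq_0; auto].
    apply Ccont_on_boundary_one.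
Qed.

End HolomorphicOnRectangle.

Lemma square_in_D z : inD z -> forall u,
  in_rect (fst z - (1 - Cmod z) / 3) (fst z + (1 - Cmod z) / 3)
          (snd z - (1 - Cmod z) / 3) (snd z + (1 - Cmod z) / 3) u -> inD u.
Proof.
  intros Hz u [Hu1 Hu2]. unfold inD in *.
  pose proof (Cmod_triangle z (u - z)) as T. replace (z + (u - z))%C with u in T by ring.
  pose proof (Cmod_le_Rabs_fst_snd (u - z)). simpl in *.
  unfold Rabs in *. destruct (Rcase_abs _); destruct (Rcase_abs _); lra.
Qed.

Lemma analytic_D_C_derive f : analytic_D f -> analytic_D (C_derive f).
Proof.
  intros Hf z Hz. set (a := (1 - Cmod z) / 3). assert (Ha : 0 < a) by (unfold a, inD in *; lra).
  apply (ex_Cderive_C_derive_interior f (fst z - a) (fst z + a) (snd z - a) (snd z + a)); try lra.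
  - intros u Hu. apply Hf, (square_in_D z Hz u Hu).
  - unfold in_rect_interior. lra.
Qed.

Lemma classA_factor f : classA f -> exists h rho, 0 < rho /\
  (forall w, Cmod w < rho -> f w = (w * h w)%C) /\ h (RtoC 0) = RtoC 1 /\ ex_Cderive h (RtoC 0).
Proof.
  intros [Hf [Hf0 Hf1]].
  assert (HD : forall u, in_rect (-1/3) (1/3) (-1/3) (1/3) u -> ex_Cderive f u).
  { intros u Hu. apply Hf. apply (square_in_D (RtoC 0)); [unfold inD; rewrite Cmod_0; lra|].
    rewrite Cmod_0. unfold in_rect in *. simpl. lra. }
  assert (H0 : in_rect_interior (-1/3) (1/3) (-1/3) (1/3) (RtoC 0)) by (unfold in_rect_interior; simpl; lra).
  destruct (holo_factor_zero f (-1/3) (1/3) (-1/3) (1/3) ltac:(lra) ltac:(lra) HD _ H0 Hf0) as [h [Hfh [Hh0 Hhd]]].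
  exists h, (dist_boundary (-1/3) (1/3) (-1/3) (1/3) (RtoC 0)). split; [|split; [|split]].
  - apply dist_boundary_pos, H0.
  - intros w Hw. rewrite Hfh by (replace (w - RtoC 0)%C with w by ring; exact Hw). f_equal. ring.
  - rewrite Hh0. apply is_C_derive_unique, Hf1.
  - exact Hhd.
Qed.

(* Near [0] we write [f w = w h w] with [h 0 = 1], so [zfpf f = f' / h] there. *)
Lemma analytic_D_zfpf f : classA f -> (forall z, inD z -> z <> RtoC 0 -> f z <> RtoC 0) -> analytic_D (zfpf f).
Proof.
  intros HA Hnz z Hz. pose proof HA as [Hf [Hf0 Hf1]].
  destruct (analytic_D_C_derive f Hf z Hz) as [l1 Hl1].
  destruct (Ceq_dec z (RtoC 0)) as [E|E].
  - subst z. destruct (classA_factor f HA) as [h [rho [Hrho [Hfh [Hh0 [lh Hhd]]]]]].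
    destruct (is_Cderive_Ccont _ _ _ Hhd (1/2)) as [r1 [Hr1 Hc]]; [lra|].
    assert (Hhnz : forall w, Cmod (w - RtoC 0) < r1 -> h w <> RtoC 0).
    { intros w Hw E. specialize (Hc w Hw). rewrite E, Hh0 in Hc.
      replace (RtoC 0 - RtoC 1)%C with (- RtoC 1)%C in Hc by ring. rewrite Cmod_opp, Cmod_1 in Hc. lra. }
    eexists. apply (is_Cderive_loc_ext (fun w => C_derive f w / h w)%C (zfpf f) (RtoC 0) _ (Rmin rho r1)).
    + apply Rmin_pos; auto.
    + intros w Hw. pose proof (Rmin_l rho r1). pose proof (Rmin_r rho r1).
      replace (w - RtoC 0)%C with w in * by ring.
      unfold zfpf. destruct (Ceq_dec w (RtoC 0)) as [Ew|Ew].
      * subst w. rewrite (is_C_derive_unique _ _ _ Hf1), Hh0. field.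
      * assert (Hhw : h w <> RtoC 0) by (apply Hhnz; replace (w - RtoC 0)%C with w by ring; lra).
        rewrite (Hfh w) by lra. field. split; auto.
    + apply is_Cderive_div; [exact Hl1 | exact Hhd |]. rewrite Hh0. intro E. injection E. lra.
  - destruct (Hf z Hz) as [l0 Hl0].
    eexists. apply (is_Cderive_loc_ext (fun w => w * C_derive f w / f w)%C (zfpf f) z _ (Cmod z)).
    + apply Cmod_gt_0, E.
    + intros w Hw. unfold zfpf. destruct (Ceq_dec w (RtoC 0)) as [Ew|Ew]; auto.
      subst w. replace (RtoC 0 - z)%C with (- z)%C in Hw by ring. rewrite Cmod_opp in Hw. lra.
    + apply is_Cderive_div; [apply is_Cderive_mult; [apply is_Cderive_id | exact Hl1] | exact Hl0 | apply Hnz; auto].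
Qed.

(** * The principal square root on the right half-plane *)

Definition csqrt (z : C) : C :=
  (sqrt ((Cmod z + fst z) / 2), snd z / (2 * sqrt ((Cmod z + fst z) / 2))).

Lemma csqrt_fst_pos z : 0 < fst z -> 0 < fst (csqrt z).
Proof. intros H. apply sqrt_lt_R0. pose proof (fst_le_Cmod z). lra. Qed.

Lemma csqrt_sqr z : 0 < fst z -> (csqrt z * csqrt z)%C = z.
Proof.
  intros H. assert (Hp : 0 < (Cmod z + fst z) / 2) by (pose proof (fst_le_Cmod z); lra).
  pose proof (sqrt_lt_R0 _ Hp) as Ha. pose proof (sqrt_sqrt _ (Rlt_le _ _ Hp)) as Hs.
  set (a := sqrt ((Cmod z + fst z) / 2)) in *.
  pose proof (Cmod_sqr z) as Hm. pose proof (Cmod_ge_0 z).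
  destruct z as [x y]. unfold csqrt, Cmult. fold a. simpl in *. f_equal.
  - replace (a * a - y / (2 * a) * (y / (2 * a))) with (a * a - y * y / (4 * (a * a))) by (field; lra).
    rewrite Hs. set (m := Cmod (x, y)) in *.
    replace (y * y) with ((m - x) * (m + x)) by nra. field. lra.
  - field. lra.
Qed.

Lemma csqrt_1 : csqrt (RtoC 1) = RtoC 1.
Proof.
  unfold csqrt. rewrite Cmod_1. simpl. replace ((1 + 1) / 2) with 1 by field. rewrite sqrt_1.
  unfold RtoC. f_equal. field.
Qed.

(* From [s^2 - s0^2 = h] we get [s - s0 = h / (s + s0)], and [|s + s0|] is at
   least [Re s0 > 0]. *)
Lemma is_Cderive_csqrt z : 0 < fst z -> is_Cderive csqrt z (/ (2 * csqrt z))%C.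
Proof.
  intros Hz. apply is_Cderive_eps. intros eps He.
  set (s0 := csqrt z). set (c0 := fst s0).
  assert (Hc0 : 0 < c0) by (apply csqrt_fst_pos; auto).
  assert (Hs0m : c0 <= Cmod s0) by apply fst_le_Cmod.
  exists (Rmin (fst z) (eps * 2 * c0 * c0 * c0)). split.
  { apply Rmin_pos; auto. repeat apply Rmult_lt_0_compat; lra. }
  intros h Hh. pose proof (Rmin_l (fst z) (eps * 2 * c0 * c0 * c0)) as M1.
  pose proof (Rmin_r (fst z) (eps * 2 * c0 * c0 * c0)) as M2.
  pose proof (Cmod_ge_0 h) as Hh0.
  assert (Hzh : 0 < fst (z + h)%C).
  { pose proof (fst_le_Cmod (- h)) as Hm. rewrite Cmod_opp in Hm. simpl in *. lra. }
  set (s := csqrt (z + h)%C).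
  assert (Hsum : c0 <= Cmod (s + s0)).
  { eapply Rle_trans; [| apply fst_le_Cmod]. change (fst (s + s0)%C) with (fst s + fst s0). fold c0.
    pose proof (csqrt_fst_pos _ Hzh). fold s in H. lra. }
  assert (Hsumnz : (s + s0)%C <> RtoC 0) by (apply Cmod_gt_0; lra).
  assert (Hs0nz : s0 <> RtoC 0) by (apply Cmod_gt_0; lra).
  assert (Hdiff : (s - s0)%C = (h / (s + s0))%C).
  { replace h with ((s * s) - (s0 * s0))%C by (unfold s, s0; rewrite !csqrt_sqr by auto; ring). field. auto. }
  assert (Hd : Cmod (s0 - s) <= Cmod h / c0).
  { rewrite Cmod_sub_sym, Hdiff, Cmod_div by auto. apply Rdiv_le_den; auto. }
  replace (s - s0 - h * / (2 * s0))%C with (h * (s0 - s) / (2 * s0 * (s + s0)))%C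
    by (rewrite Hdiff; field; split; auto).
  rewrite Cmod_div, !Cmod_mult by (repeat apply Cmult_neq_0; auto; intro E; injection E; lra).
  rewrite Cmod_R, Rabs_right by lra.
  apply (Rle_trans _ (Cmod h * (Cmod h / c0) / (2 * c0 * c0))).
  - apply Rle_trans with (Cmod h * (Cmod h / c0) / (2 * Cmod s0 * Cmod (s + s0))).
    + unfold Rdiv. apply Rmult_le_compat_r. apply Rlt_le, Rinv_0_lt_compat. repeat apply Rmult_lt_0_compat; lra.
      apply Rmult_le_compat_l; auto.
    + apply Rdiv_le_den. apply Rmult_le_pos; auto. apply Rdiv_le_0_compat; lra.
      repeat apply Rmult_lt_0_compat; lra. apply Rmult_le_compat; nra.
  - replace (Cmod h * (Cmod h / c0) / (2 * c0 * c0)) with (Cmod h / (2 * c0 * c0 * c0) * Cmod h) by (field; lra).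
    apply Rmult_le_compat_r; auto.
    apply (Rmult_le_reg_r (2 * c0 * c0 * c0)). repeat apply Rmult_lt_0_compat; lra.
    unfold Rdiv. rewrite Rmult_assoc, Rinv_l by (apply Rgt_not_eq; repeat apply Rmult_lt_0_compat; lra). lra.
Qed.

(** * A sufficient condition for subordination to [phi_car] *)

Definition phi_car_inv (p : C) : C := (csqrt (2 * p - 1) - 1)%C.

Definition in_car_disk (p : C) := Cmod (p - RtoC (5/4)) < 3/4.

Lemma in_car_disk_fst p : in_car_disk p -> 0 < fst (2 * p - 1)%C.
Proof.
  unfold in_car_disk. intros H. pose proof (re_le_Cmod (p - RtoC (5/4))%C).
  destruct p as [a b]. simpl in *. unfold Rabs in H0. destruct (Rcase_abs _); lra.
Qed.

Lemma phi_car_phi_car_inv p : in_car_disk p -> phi_car (phi_car_inv p) = p.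
Proof.
  intros H. pose proof (csqrt_sqr _ (in_car_disk_fst p H)) as Hs.
  unfold phi_car, phi_car_inv. set (s := csqrt (2 * p - 1)%C) in *.
  replace (1 + (s - 1) + (s - 1) * (s - 1) / 2)%C with ((s * s + 1) / 2)%C
    by (field; intro E; injection E; lra).
  rewrite Hs. field.
Qed.

(* [p |-> 2 p - 1] maps the disk onto [|z - 3/2| < 3/2], i.e. [|z|^2 < 3 Re z],
   and [s = csqrt z] then satisfies [|s|^2 < 2 Re s]. *)
Lemma phi_car_inv_inD p : in_car_disk p -> inD (phi_car_inv p).
Proof.
  intros H. pose proof (in_car_disk_fst p H) as Hz.
  pose proof (csqrt_sqr _ Hz) as Hs. pose proof (csqrt_fst_pos _ Hz) as Ha.
  unfold in_car_disk in H. unfold inD, phi_car_inv.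
  set (s := csqrt (2 * p - 1)%C) in *.
  assert (Hp : p = ((s * s + 1) / 2)%C) by (rewrite Hs; field; intro E; injection E; lra).
  rewrite Hp in H. clearbody s. destruct s as [a b]. simpl in Ha.
  assert (Hlt : Cmod (((a, b) * (a, b) + 1) / 2 - RtoC (5 / 4))%C * Cmod (((a, b) * (a, b) + 1) / 2 - RtoC (5 / 4))%C < 3/4 * (3/4))
    by (pose proof (Cmod_ge_0 (((a, b) * (a, b) + 1) / 2 - RtoC (5 / 4))%C); nra).
  rewrite Cmod_sqr in Hlt. apply Rsqr_incrst_0; [| apply Cmod_ge_0 | lra].
  unfold Rsqr. rewrite Cmod_sqr. simpl in *. nra.
Qed.

Lemma phi_car_inv_1 : phi_car_inv (RtoC 1) = RtoC 0.
Proof.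
  unfold phi_car_inv. replace (2 * RtoC 1 - 1)%C with (RtoC 1) by ring. rewrite csqrt_1. ring.
Qed.

Lemma is_Cderive_phi_car_inv p : in_car_disk p ->
  is_Cderive phi_car_inv p (2 * / (2 * csqrt (2 * p - 1)))%C.
Proof.
  intros H. unfold phi_car_inv. eapply is_Cderive_eq.
  - apply is_Cderive_minus; [| apply is_Cderive_const].
    apply (is_Cderive_comp csqrt (fun w => 2 * w - 1)%C).
    + apply is_Cderive_csqrt, in_car_disk_fst, H.
    + apply is_Cderive_minus; [apply is_Cderive_scal, is_Cderive_id | apply is_Cderive_const].
  - ring.
Qed.

Lemma subord_phi_car (F G : C -> C) :
  analytic_D G -> G (RtoC 0) = RtoC 1 -> (forall z, inD z -> in_car_disk (G z)) ->
  (forall z, inD z -> F z = G z) -> subord F phi_car.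
Proof.
  intros HG HG0 Hdisk HFG.
  exists (fun z => phi_car_inv (G z)). split; [|split; [|split]].
  - intros z Hz. destruct (HG z Hz) as [l Hl]. eexists.
    apply (is_Cderive_comp phi_car_inv G); [apply is_Cderive_phi_car_inv, Hdisk, Hz | exact Hl].
  - intros z Hz. apply phi_car_inv_inD, Hdisk, Hz.
  - rewrite HG0. apply phi_car_inv_1.
  - intros z Hz. rewrite HFG, phi_car_phi_car_inv; auto.
Qed.

Lemma in_car_disk_near_1 p : Cmod (p - 1) < 1/2 -> in_car_disk p.
Proof.
  intros H. unfold in_car_disk.
  pose proof (Cmod_triangle (p - 1) (RtoC (- (1/4)))) as T.
  replace (p - 1 + RtoC (- (1 / 4)))%C with (p - RtoC (5/4))%C in T
    by (destruct p; unfold RtoC, Cminus, Cplus, Copp; simpl; f_equal; field).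
  rewrite Cmod_R, Rabs_left in T by lra. lra.
Qed.

Lemma in_car_disk_ratio p : 3 * Cmod (p - 1) < Cmod (p + 1) -> in_car_disk p.
Proof.
  intros H. unfold in_car_disk. pose proof (Cmod_ge_0 (p - 1)%C).
  assert (9 * (Cmod (p - 1) * Cmod (p - 1)) < Cmod (p + 1) * Cmod (p + 1)) by nra.
  rewrite !Cmod_sqr in H1. apply Rsqr_incrst_0; [| apply Cmod_ge_0 | lra].
  unfold Rsqr. rewrite Cmod_sqr. destruct p as [a b]. simpl in *. nra.
Qed.

Lemma janowski_denom_neq_0 (B : R) (u : C) : Rabs B <= 1 -> inD u -> (1 + RtoC B * u)%C <> RtoC 0.
Proof.
  intros Hb Hu. apply Cmod_gt_0. unfold inD in Hu.
  pose proof (Cmod_triangle_rev_plus (RtoC 1) (RtoC B * u)). rewrite Cmod_1, Cmod_mult, Cmod_R in H.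
  pose proof (Cmod_ge_0 u). pose proof (Rabs_pos B). nra.
Qed.

Lemma janowski_0 A B : janowski A B (RtoC 0) = RtoC 1.
Proof.
  unfold janowski. replace (1 + RtoC A * RtoC 0)%C with (RtoC 1) by ring.
  replace (1 + RtoC B * RtoC 0)%C with (RtoC 1) by ring. field.
Qed.

Lemma S_star_AB_subset_car A B f : Rabs B <= 1 ->
  (forall u, inD u -> in_car_disk (janowski A B u)) -> S_star_AB A B f -> S_star_car f.
Proof.
  intros HB Hdisk [HA [w [Hw [HwD [Hw0 Hwe]]]]]. split; auto.
  apply (subord_phi_car _ (fun z => janowski A B (w z))); auto.
  - intros z Hz. destruct (Hw z Hz) as [l Hl]. eexists. unfold janowski.
    apply is_Cderive_div; [..| apply janowski_denom_neq_0; auto];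
    apply is_Cderive_plus; [apply is_Cderive_const | apply is_Cderive_scal; exact Hl | apply is_Cderive_const | apply is_Cderive_scal; exact Hl].
  - rewrite Hw0. apply janowski_0.
Qed.

Lemma janowski_1_minus_alpha_in_car_disk alpha u : 1/2 <= alpha < 1 -> inD u ->
  in_car_disk (janowski (1 - alpha) 0 u).
Proof.
  intros Ha Hu. apply in_car_disk_near_1. unfold inD in Hu.
  pose proof (janowski_denom_neq_0 0 u ltac:(rewrite Rabs_R0; lra) Hu) as Hd.
  replace (janowski (1 - alpha) 0 u - 1)%C with (RtoC (1 - alpha) * u)%C by (unfold janowski; field; auto).
  rewrite Cmod_mult, Cmod_R, Rabs_right by lra. pose proof (Cmod_ge_0 u). nra.
Qed.

Lemma janowski_sym_in_car_disk alpha u : 0 < alpha <= 1/3 -> inD u ->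
  in_car_disk (janowski alpha (- alpha) u).
Proof.
  intros Ha Hu. apply in_car_disk_ratio. unfold inD in Hu.
  assert (Hab : Rabs (- alpha) <= 1) by (rewrite Rabs_Ropp, Rabs_right; lra).
  pose proof (janowski_denom_neq_0 (- alpha) u Hab Hu) as Hd.
  pose proof (proj1 (Cmod_gt_0 _) Hd) as Hdpos.
  assert (Eo : RtoC (- alpha) = (- RtoC alpha)%C) by (unfold RtoC, Copp; simpl; f_equal; ring).
  unfold janowski. rewrite Eo in *.
  replace ((1 + RtoC alpha * u) / (1 + - RtoC alpha * u) - 1)%C with (2 * RtoC alpha * u / (1 + - RtoC alpha * u))%C
    by (field; auto).
  replace ((1 + RtoC alpha * u) / (1 + - RtoC alpha * u) + 1)%C with (2 / (1 + - RtoC alpha * u))%C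
    by (field; auto).
  rewrite !Cmod_div by exact Hd. rewrite !Cmod_mult, !Cmod_R, !Rabs_right by lra.
  assert (3 * (2 * alpha * Cmod u) < 2) by (pose proof (Cmod_ge_0 u); nra).
  unfold Rdiv. pose proof (Rinv_0_lt_compat _ Hdpos). nra.
Qed.

Lemma zfpf_0 f : zfpf f (RtoC 0) = RtoC 1.
Proof. unfold zfpf. destruct (Ceq_dec (RtoC 0) 0); congruence. Qed.

Lemma zfpf_eq_0_of_root f z : z <> RtoC 0 -> f z = RtoC 0 -> zfpf f z = RtoC 0.
Proof.
  intros Hz Hf. unfold zfpf. destruct (Ceq_dec z 0); [contradiction|]. rewrite Hf.
  unfold Cdiv. replace (/ RtoC 0)%C with (RtoC 0) by (unfold Cinv, RtoC; simpl; f_equal; unfold Rdiv; ring). ring.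
Qed.

Lemma not_in_car_disk_0 : ~ in_car_disk (RtoC 0).
Proof.
  unfold in_car_disk. replace (RtoC 0 - RtoC (5/4))%C with (RtoC (- (5/4))) by (unfold RtoC, Cminus, Cplus, Copp; simpl; f_equal; ring).
  rewrite Cmod_R, Rabs_left by lra. lra.
Qed.

Lemma S_star_car_of_car_disk f : classA f -> (forall z, inD z -> in_car_disk (zfpf f z)) -> S_star_car f.
Proof.
  intros HA Hdisk. split; auto.
  assert (Hnz : forall z, inD z -> z <> RtoC 0 -> f z <> RtoC 0).
  { intros z Hz Hz0 E. apply not_in_car_disk_0. rewrite <- (zfpf_eq_0_of_root f z Hz0 E). auto. }
  apply (subord_phi_car _ (zfpf f)); auto using analytic_D_zfpf, zfpf_0.
Qed.

Lemma continuity_pt_fst_line (F : C -> C) (z1 : C) t :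
  Ccont F (RtoC t * z1)%C -> continuity_pt (fun s => fst (F (RtoC s * z1)%C)) t.
Proof.
  intros H eps He. destruct (H eps He) as [d [Hd H']]. pose proof (Cmod_ge_0 z1).
  exists (d / (Cmod z1 + 1)). split. { apply Rdiv_lt_0_compat; lra. }
  intros s [_ Hs]. simpl in *. unfold R_dist in *.
  assert (Hc : Cmod (RtoC s * z1 - RtoC t * z1)%C < d).
  { replace (RtoC s * z1 - RtoC t * z1)%C with (RtoC (s - t) * z1)%C
      by (unfold RtoC, Cmult, Cminus, Cplus, Copp; simpl; f_equal; ring).
    rewrite Cmod_mult, Cmod_R. pose proof (Rabs_pos (s - t)).
    assert (Rabs (s - t) * (Cmod z1 + 1) < d).
    { apply (Rmult_lt_reg_r (/ (Cmod z1 + 1))). apply Rinv_0_lt_compat; lra.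
      rewrite Rmult_assoc, Rinv_r by lra. unfold Rdiv in Hs. lra. }
    nra. }
  specialize (H' _ Hc). pose proof (re_le_Cmod (F (RtoC s * z1)%C - F (RtoC t * z1)%C)%C) as Hre.
  unfold Re in Hre. simpl in Hre. unfold Rminus. lra.
Qed.

(* The hypothesis does not exclude [p z = -1] by itself, because [(-2) / 0]
   is [0] in Coquelicot.  Along the segment [[0, z]] the real part of [p]
   would have to vanish, at a point where [|p - 1| = |p + 1|]. *)
Lemma ratio_bound_neq_m1 (p : C -> C) : (forall z, inD z -> Ccont p z) -> p (RtoC 0) = RtoC 1 ->
  (forall z, inD z -> Cmod ((p z - 1) / (p z + 1))%C < 1/3) -> forall z, inD z -> p z <> (- RtoC 1)%C.
Proof.
  intros Hc Hp0 Hr z1 Hz1 E1.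
  assert (Hseg : forall t, 0 <= t <= 1 -> inD (RtoC t * z1)%C).
  { intros t Ht. unfold inD in *. rewrite Cmod_mult, Cmod_R, Rabs_right by lra. pose proof (Cmod_ge_0 z1). nra. }
  destruct (Ranalysis5.IVT_interv (fun s => - fst (p (RtoC s * z1)%C)) 0 1) as [t [Ht Ht0]].
  - intros t Ht. apply continuity_pt_opp, continuity_pt_fst_line, Hc, Hseg, Ht.
  - lra.
  - replace (RtoC 0 * z1)%C with (RtoC 0) by ring. rewrite Hp0. simpl. lra.
  - replace (RtoC 1 * z1)%C with z1 by ring. rewrite E1. simpl. lra.
  - specialize (Hr _ (Hseg t Ht)). destruct (p (RtoC t * z1)%C) as [a q]. simpl in Ht0.
    replace a with 0 in * by lra.
    assert (Hq : ((0, q) + 1)%C <> RtoC 0) by (intro E; injection E; lra).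
    rewrite Cmod_div in Hr by exact Hq.
    replace (Cmod ((0, q) - 1)%C) with (Cmod ((0, q) + 1)%C) in Hr by (unfold Cmod; f_equal; simpl; ring).
    pose proof (proj1 (Cmod_gt_0 _) Hq). unfold Rdiv in Hr. rewrite Rinv_r in Hr by lra. lra.
Qed.

Lemma S_star_car_of_ratio_bound f : classA f ->
  (forall z, inD z -> Cmod ((zfpf f z - 1) / (zfpf f z + 1))%C < 1/3) -> S_star_car f.
Proof.
  intros HA H.
  assert (Hnz : forall z, inD z -> z <> RtoC 0 -> f z <> RtoC 0).
  { intros z Hz Hz0 E. specialize (H z Hz). rewrite (zfpf_eq_0_of_root f z Hz0 E) in H.
    replace ((RtoC 0 - 1) / (RtoC 0 + 1))%C with (- RtoC 1)%C in H by (field; intro X; injection X; lra).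
    rewrite Cmod_opp, Cmod_1 in H. lra. }
  pose proof (ratio_bound_neq_m1 (zfpf f) (fun z Hz => ex_Cderive_Ccont _ _ (analytic_D_zfpf f HA Hnz z Hz))
    (zfpf_0 f) H) as Hm1.
  apply S_star_car_of_car_disk; auto. intros z Hz. apply in_car_disk_ratio.
  specialize (H z Hz).
  assert (E0 : (zfpf f z + 1)%C <> RtoC 0).
  { intro E. apply (Hm1 z Hz). replace (zfpf f z) with ((zfpf f z + 1) - 1)%C by ring. rewrite E. ring. }
  rewrite Cmod_div in H by exact E0. pose proof (proj1 (Cmod_gt_0 _) E0).
  apply (Rmult_lt_compat_r (Cmod (zfpf f z + 1))) in H; auto.
  unfold Rdiv in H. rewrite Rmult_assoc, Rinv_l in H by lra. lra.
Qed.

Theorem corollary3p2 :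
  (forall alpha : R, 1/2 <= alpha < 1 ->
     forall f : C -> C, S_star_AB (1 - alpha) 0 f -> S_star_car f) /\
  (forall alpha : R, 0 < alpha <= 1/3 ->
     forall f : C -> C, S_star_AB alpha (- alpha) f -> S_star_car f) /\
  (forall f : C -> C, classA f ->
     ((forall z : C, inD z -> Cmod (zfpf f z - 1)%C < 1/2) \/
      (forall z : C, inD z ->
         Cmod ((zfpf f z - 1) / (zfpf f z + 1))%C < 1/3)) ->
     S_star_car f).
Proof.
  split; [|split].
  - intros alpha Ha f. apply S_star_AB_subset_car.
    + rewrite Rabs_R0. lra.
    + intros u Hu. apply janowski_1_minus_alpha_in_car_disk; auto.
  - intros alpha Ha f. apply S_star_AB_subset_car.
    + rewrite Rabs_Ropp, Rabs_right; lra.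
    + intros u Hu. apply janowski_sym_in_car_disk; auto.
  - intros f HA [H | H].
    + apply S_star_car_of_car_disk; auto. intros z Hz. apply in_car_disk_near_1, H, Hz.
    + apply S_star_car_of_ratio_bound; auto.
Qed.
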